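(* Let $n\geqslant2$, $0<\varepsilon<1$, $i_0,j_0\in\{0,\dots,n\}$, $B\geqslant1$, $Q=\sqrt B$. Let $\boldsymbol{x},\boldsymbol{y}\in\mathbf{Z}^{n+1}$ with $x_{i_0},y_{j_0}\geqslant1$, $|x_i|\leqslant x_{i_0}$ and $|y_j|\leqslant y_{j_0}$ for all $i,j$, and put $P=B/(x_{i_0}y_{j_0})$. For an integer $q\geqslant1$ and $\boldsymbol{c}\in\mathbf{Z}^{n+1}\setminus\{\boldsymbol 0\}$ let \[I(\boldsymbol{c})=\int_{\mathbf{R}^{n+1}}\underline{w}_\varepsilon(\boldsymbol{u})\,h\Big(\frac qQ,\frac{\sum_kx_ky_ku_k}{x_{i_0}y_{j_0}}\Big)e_q(-P\,\boldsymbol{c}.\boldsymbol{u})\,d\boldsymbol{u}.\] Then for every integer $N\geqslant0$, \[I(\boldsymbol{c})\ll\frac Qq\Big(\frac{Q}{P|\boldsymbol{c}|}\Big)^N=\frac Qq\Big(\frac{x_{i_0}y_{j_0}}{\sqrt B\,|\boldsymbol{c}|}\Big)^N,\] with an implied constant depending only on $n,N,\varepsilon$.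
   Context: $|\boldsymbol{c}|=\max_k|c_k|$. $e(x)=\exp(2i\pi x)$, $e_q(x)=e(x/q)$. $\omega_0(x)=\exp(-(1-x^2)^{-1})$ for $|x|<1$, $0$ otherwise; $c_0=\int\omega_0$; $\omega(x)=4c_0^{-1}\omega_0(4x-3)$; $h(x,y)=\sum_{j\geqslant1}\frac1{xj}(\omega(xj)-\omega(\frac{|y|}{xj}))$ for $x>0$. $\underline{\omega}_\varepsilon(x)=c_0^{-1}\int_{-\infty}^{x/\varepsilon-1}\omega_0(y)dy$, and $\underline{w}_\varepsilon(\boldsymbol{u})=\prod_{k=0}^n\underline{\omega}_\varepsilon(1-|u_k|)\underline{\omega}_\varepsilon(|u_k|-\frac1P)$. *)

From Stdlib Require Import Reals ZArith Arith.
From Coquelicot Require Import Coquelicot.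
Open Scope R_scope.

Definition RIntR (f : R -> R) : R :=
  RInt_gen f (Rbar_locally m_infty) (Rbar_locally p_infty).

Definition CIntR (f : R -> C) : C :=
  (RIntR (fun t => Re (f t)), RIntR (fun t => Im (f t))).

(* vectors of R^{n+1} are functions nat -> R (only indices 0..n matter) *)
Definition setv (u : nat -> R) (m : nat) (t : R) : nat -> R :=
  fun k => if Nat.eqb k m then t else u k.

(* iterated integral over coordinates 0..m-1 : intR m F = int_{R^m} F(u) du *)
Fixpoint intR (m : nat) (F : (nat -> R) -> C) : C :=
  match m with
  | O => F (fun _ => 0)
  | S m' => CIntR (fun t => intR m' (fun u => F (setv u m' t)))
  end.

Fixpoint sumR (n : nat) (f : nat -> R) : R :=
  match n with O => f O | S m => sumR m f + f (S m) end.
Fixpoint prodR (n : nat) (f : nat -> R) : R :=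
  match n with O => f O | S m => prodR m f * f (S m) end.

Fixpoint supnorm (n : nat) (c : nat -> Z) : R :=
  match n with
  | O => IZR (Z.abs (c O))
  | S m => Rmax (supnorm m c) (IZR (Z.abs (c (S m))))
  end.

Definition e (x : R) : C := (cos (2 * PI * x), sin (2 * PI * x)).
Definition e_q (q : R) (x : R) : C := e (x / q).

Definition omega0 (x : R) : R :=
  if Rlt_dec (Rabs x) 1 then exp (- / (1 - x ^ 2)) else 0.
Definition c0 : R := RIntR omega0.
Definition omega (x : R) : R := 4 * / c0 * omega0 (4 * x - 3).

Definition h (x y : R) : R :=
  Series (fun j : nat =>
    let jj := INR (S j) in / (x * jj) * (omega (x * jj) - omega (Rabs y / (x * jj)))).

Definition omega_eps (eps x : R) : R :=
  / c0 * RInt_gen omega0 (Rbar_locally m_infty) (at_point (x / eps - 1)).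

Definition w_eps (n : nat) (eps P : R) (u : nat -> R) : R :=
  prodR n (fun k => omega_eps eps (1 - Rabs (u k)) * omega_eps eps (Rabs (u k) - / P)).

Definition Ic (n : nat) (eps B : R) (i0 j0 : nat) (x y : nat -> Z) (q : nat)
  (c : nat -> Z) : C :=
  let Q := sqrt B in
  let X := IZR (x i0) in
  let Y := IZR (y j0) in
  let P := B / (X * Y) in
  intR (S n) (fun u =>
    Cmult
      (RtoC (w_eps n eps P u *
             h (INR q / Q) (sumR n (fun k => IZR (x k) * IZR (y k) * u k) / (X * Y))))
      (e_q (INR q) (- P * sumR n (fun k => IZR (c k) * u k)))).

(* Write the integrand as a real amplitude [G u = w(u) h(q/Q, a.u)], with [a_l = x_l y_l / (x_i0 y_j0)],
   times the phase [e_q(-P c.u)].  Choose [k] with [|c_k| = |c|]: translating [u_k] by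
   [s = q / (2 P c_k)] changes the sign of the phase, so the [N]-th finite difference of [G] in the
   direction [u_k] has an integral of modulus [2^N |I(c)|].  On the support of the weight [|a.u| <= n+1],
   so only the terms [j << Q/q] of the series [h] survive; as [omega] and [omega_eps] are smooth,
   every slice [t |-> G (u + t e_k)] has [j]-th derivatives [<< (Q/q)^(1+j)].  Hence the [N]-th
   difference is [<< (Q/q) (|s| Q/q)^N] and [2 |s| Q/q = x_i0 y_j0 / (sqrt B |c|)].  When this ratio
   exceeds [1] the trivial bound [<< Q/q] suffices, and when [q/Q > 2(n+1)] the integrand vanishes. *)

From Stdlib Require Import Reals ZArith Arith Lra Lia FunctionalExtensionality List.
From Coquelicot Require Import Coquelicot.
Open Scope R_scope.

Definition lipschitz (f : R -> R) (K : R) := forall a b, Rabs (f a - f b) <= K * Rabs (a - b).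

Lemma lipschitz_continuous (f : R -> R) (K : R) : lipschitz f K -> forall x, continuous f x.
Proof.
  intros H x. apply continuity_pt_filterlim.
  intros eps Heps. exists (eps / (Rabs K + 1)). split.
  { apply Rdiv_lt_0_compat; [lra| pose proof (Rabs_pos K); lra]. }
  intros y [_ Hy]. simpl in *. unfold R_dist in *.
  eapply Rle_lt_trans. apply H.
  assert (Rabs K * Rabs (y - x) <= Rabs K * (eps / (Rabs K + 1))).
  { apply Rmult_le_compat_l. apply Rabs_pos. lra. }
  assert (Rabs K * (eps / (Rabs K + 1)) < eps).
  { apply Rmult_lt_reg_r with (Rabs K + 1). pose proof (Rabs_pos K); lra.
    field_simplify. lra. pose proof (Rabs_pos K); lra. }
  pose proof (Rle_abs K).
  assert (K * Rabs (y - x) <= Rabs K * Rabs (y-x)).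
  { apply Rmult_le_compat_r. apply Rabs_pos. auto. }
  lra.
Qed.

Lemma RInt_vanishing (f : R -> R) a b :
  (forall x, Rmin a b < x < Rmax a b -> f x = 0) -> RInt f a b = 0.
Proof.
  intros H. rewrite (RInt_ext f (fun _ => 0)) by exact H.
  rewrite RInt_const. unfold scal; simpl. unfold mult; simpl. ring.
Qed.

Lemma RInt_compact_eq (f : R -> R) L a b :
  (forall x, continuous f x) -> (forall x, L < Rabs x -> f x = 0) ->
  0 <= L -> a <= -L -> L <= b -> RInt f a b = RInt f (-L) L.
Proof.
  intros Hc Hz HL Ha Hb.
  assert (Hex : forall u v, ex_RInt f u v) by (intros; apply (@ex_RInt_continuous R_CompleteNormedModule); auto).
  rewrite <- (RInt_Chasles f a (-L) b) by auto.
  rewrite <- (RInt_Chasles f (-L) L b) by auto.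
  rewrite (RInt_vanishing f a (-L)).
  rewrite (RInt_vanishing f L b).
  change (0 + (RInt f (-L) L + 0) = RInt f (-L) L). ring.
  - intros x Hx. apply Hz. rewrite Rmin_left in Hx by lra. rewrite Rmax_right in Hx by lra.
    rewrite Rabs_right; lra.
  - intros x Hx. apply Hz. rewrite Rmin_left in Hx by lra. rewrite Rmax_right in Hx by lra.
    rewrite Rabs_left; lra.
Qed.

(* [RIntR] is an improper integral built with [RInt_gen], whose value is junk when the limit does
   not exist; for continuous compactly supported functions it is an ordinary [RInt]. *)
Lemma RIntR_compact (f : R -> R) L :
  (forall x, continuous f x) -> (forall x, L < Rabs x -> f x = 0) ->
  0 <= L -> RIntR f = RInt f (-L) L.
Proof.
  intros Hc Hz HL. unfold RIntR.
  apply is_RInt_gen_unique.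
  intros P HP. unfold filtermapi.
  apply Filter_prod with (fun a => a < -L) (fun b => L < b).
  - exists (-L). auto.
  - exists L. auto.
  - intros a b Ha Hb. exists (RInt f a b). split.
    + apply RInt_correct. apply (@ex_RInt_continuous R_CompleteNormedModule); auto.
    + simpl. rewrite (RInt_compact_eq f L) by (auto; lra). apply locally_singleton. exact HP.
Qed.

Lemma RIntR_compact_ab (f : R -> R) L a b :
  (forall x, continuous f x) -> (forall x, L < Rabs x -> f x = 0) ->
  0 <= L -> a <= -L -> L <= b -> RIntR f = RInt f a b.
Proof.
  intros. rewrite (RIntR_compact f L) by auto. symmetry. apply RInt_compact_eq; auto.
Qed.

Lemma RIntR_shift (f : R -> R) L s :
  (forall x, continuous f x) -> (forall x, L < Rabs x -> f x = 0) ->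
  0 <= L -> RIntR (fun t => f (t + s)) = RIntR f.
Proof.
  intros Hc Hz HL.
  assert (Hc' : forall x, continuous (fun t => f (t + s)) x).
  { intros x. apply continuous_comp with (f := fun t => t + s).
    apply (lipschitz_continuous _ 1). intros a b. replace (a + s - (b + s)) with (a - b) by ring. lra. apply Hc. }
  rewrite (RIntR_compact (fun t => f (t+s)) (L + Rabs s)); auto.
  2: { intros x Hx. apply Hz. pose proof (Rabs_triang x s). pose proof (Rabs_triang_inv x (-s)).
       rewrite Rabs_Ropp in H0. unfold Rminus in H0. rewrite Ropp_involutive in H0. lra. }
  2: { pose proof (Rabs_pos s); lra. }
  transitivity (RInt (fun y => scal 1 (f (1 * y + s))) (-(L+Rabs s)) (L + Rabs s)).
  { apply RInt_ext. intros. unfold scal; simpl; unfold mult; simpl. f_equal. ring_simplify. f_equal. ring. }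
  rewrite (@RInt_comp_lin R_CompleteNormedModule). 2: { apply (@ex_RInt_continuous R_CompleteNormedModule); auto. }
  symmetry. apply RIntR_compact_ab with L; auto.
  - pose proof (Rle_abs s); pose proof (Rle_abs (-s)); rewrite Rabs_Ropp in *; lra.
  - pose proof (Rle_abs s); pose proof (Rle_abs (-s)); rewrite Rabs_Ropp in *; lra.
Qed.

Lemma RIntR_lincomb (f1 f2 : R -> R) K1 K2 L a b :
  lipschitz f1 K1 -> lipschitz f2 K2 -> (forall x, L < Rabs x -> f1 x = 0) -> (forall x, L < Rabs x -> f2 x = 0) ->
  0 <= L -> RIntR (fun t => a * f1 t + b * f2 t) = a * RIntR f1 + b * RIntR f2.
Proof.
  intros H1 H2 Z1 Z2 HL.
  assert (C1 : forall x, continuous f1 x) by (apply (lipschitz_continuous _ K1); auto).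
  assert (C2 : forall x, continuous f2 x) by (apply (lipschitz_continuous _ K2); auto).
  assert (C3 : forall x, continuous (fun t => a * f1 t + b * f2 t) x).
  { apply (lipschitz_continuous _ (Rabs a * K1 + Rabs b * K2)). intros u v.
    replace (a * f1 u + b * f2 u - (a * f1 v + b * f2 v)) with (a * (f1 u - f1 v) + b * (f2 u - f2 v)) by ring.
    eapply Rle_trans. apply Rabs_triang. rewrite !Rabs_mult.
    specialize (H1 u v). specialize (H2 u v).
    assert (Rabs a * Rabs (f1 u - f1 v) <= Rabs a * (K1 * Rabs (u - v))) by (apply Rmult_le_compat_l; auto; apply Rabs_pos).
    assert (Rabs b * Rabs (f2 u - f2 v) <= Rabs b * (K2 * Rabs (u - v))) by (apply Rmult_le_compat_l; auto; apply Rabs_pos).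
    nra. }
  rewrite (RIntR_compact _ L) by (auto; intros x Hx; rewrite Z1, Z2 by auto; ring).
  rewrite (RIntR_compact f1 L) by auto. rewrite (RIntR_compact f2 L) by auto.
  assert (E1 : ex_RInt f1 (-L) L) by (apply (@ex_RInt_continuous R_CompleteNormedModule); auto).
  assert (E2 : ex_RInt f2 (-L) L) by (apply (@ex_RInt_continuous R_CompleteNormedModule); auto).
  transitivity (RInt (fun t => plus (scal a (f1 t)) (scal b (f2 t))) (-L) L).
  { apply RInt_ext. intros; reflexivity. }
  apply is_RInt_unique. apply (@is_RInt_plus R_NormedModule);
  apply (@is_RInt_scal R_NormedModule); apply (@RInt_correct R_CompleteNormedModule); auto.
Qed.

Lemma RIntR_bound (f : R -> R) K L M :
  lipschitz f K -> (forall x, L < Rabs x -> f x = 0) -> 0 <= L -> (forall x, Rabs (f x) <= M) ->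
  Rabs (RIntR f) <= 2 * L * M.
Proof.
  intros H Z HL HM.
  assert (C : forall x, continuous f x) by (apply (lipschitz_continuous _ K); auto).
  rewrite (RIntR_compact f L) by auto.
  replace (2 * L * M) with ((L - - L) * M) by ring.
  apply abs_RInt_le_const. lra. apply (@ex_RInt_continuous R_CompleteNormedModule); auto.
  intros; auto.
Qed.

Definition l1dist (n : nat) (u v : nat -> R) : R := sumR n (fun l => Rabs (u l - v l)).

Lemma sumR_le n f g : (forall l, (l <= n)%nat -> f l <= g l) -> sumR n f <= sumR n g.
Proof.
  induction n; simpl; intros H. apply H; lia.
  apply Rplus_le_compat. apply IHn. intros; apply H; lia. apply H; lia.
Qed.

Lemma sumR_ext n f g : (forall l, (l <= n)%nat -> f l = g l) -> sumR n f = sumR n g.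
Proof.
  induction n; simpl; intros H. apply H; lia.
  rewrite IHn, (H (S n)); auto; intros; apply H; lia.
Qed.

Lemma sumR_nonneg n f : (forall l, (l <= n)%nat -> 0 <= f l) -> 0 <= sumR n f.
Proof.
  induction n; simpl; intros H. apply H; lia.
  pose proof (H (S n) (le_n _)). assert (0 <= sumR n f) by (apply IHn; intros; apply H; lia). lra.
Qed.

Lemma sumR_zero n : sumR n (fun _ => 0) = 0.
Proof. induction n; simpl; try rewrite IHn; ring. Qed.

Lemma sumR_single n m a : (m <= n)%nat -> sumR n (fun l => if Nat.eqb l m then a else 0) = a.
Proof.
  induction n; cbn [sumR]; intros H.
  - destruct m; [reflexivity| lia].
  - destruct (Nat.eqb (S n) m) eqn:E.
    + apply Nat.eqb_eq in E. subst. rewrite (sumR_ext n _ (fun _ => 0)).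
      * rewrite sumR_zero. ring.
      * intros l Hl. destruct (Nat.eqb l (S n)) eqn:E2; auto. apply Nat.eqb_eq in E2; lia.
    + apply Nat.eqb_neq in E. rewrite IHn by lia. ring.
Qed.

Lemma sumR_plus n f g : sumR n (fun l => f l + g l) = sumR n f + sumR n g.
Proof. induction n; simpl; try rewrite IHn; ring. Qed.

Lemma sumR_scal n a f : sumR n (fun l => a * f l) = a * sumR n f.
Proof. induction n; simpl; try rewrite IHn; ring. Qed.

Lemma l1dist_setv n m u t s : (m <= n)%nat -> l1dist n (setv u m t) (setv u m s) = Rabs (t - s).
Proof.
  intros H. unfold l1dist. rewrite <- (sumR_single n m (Rabs (t - s))) by auto.
  apply sumR_ext. intros l Hl. unfold setv. destruct (Nat.eqb l m); auto.
  replace (u l - u l) with 0 by ring. apply Rabs_R0.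
Qed.

Lemma l1dist_setv_le n m u v t : l1dist n (setv u m t) (setv v m t) <= l1dist n u v.
Proof.
  unfold l1dist. apply sumR_le. intros l Hl. unfold setv. destruct (Nat.eqb l m).
  replace (t - t) with 0 by ring. rewrite Rabs_R0. apply Rabs_pos. lra.
Qed.

Lemma l1dist_nonneg n u v : 0 <= l1dist n u v.
Proof. apply sumR_nonneg. intros; apply Rabs_pos. Qed.

Definition Ccomb (a : R) (z : C) (b : R) (w : C) : C :=
  (a * fst z + b * fst w, a * snd z + b * snd w).

Lemma Ccomb_eq a z b w : Ccomb a z b w = Cplus (Cmult (RtoC a) z) (Cmult (RtoC b) w).
Proof. destruct z, w. unfold Ccomb, Cplus, Cmult, RtoC; simpl. f_equal; ring. Qed.

Lemma Cmod_Ccomb a z b w : Cmod (Ccomb a z b w) <= Rabs a * Cmod z + Rabs b * Cmod w.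
Proof.
  rewrite Ccomb_eq. eapply Rle_trans. apply Cmod_triangle. rewrite !Cmod_mult, !Cmod_R. lra.
Qed.

Lemma Cmod_le_abs_sum (a b : R) : Cmod (a, b) <= Rabs a + Rabs b.
Proof.
  replace (a, b) with (Cplus (RtoC a) (Cmult (RtoC b) Ci)).
  eapply Rle_trans. apply Cmod_triangle. rewrite Cmod_mult, Cmod_Ci, !Cmod_R. lra.
  unfold Cplus, Cmult, RtoC, Ci; simpl. f_equal; ring.
Qed.

(* Lipschitz for the l1 distance, bounded, and vanishing once one of the first [m] coordinates
   (those still to be integrated by [intR m]) leaves [-L, L]. *)
Definition admissible (n m : nat) (L : R) (F : (nat -> R) -> C) : Prop :=
  (exists Lip, forall u v, Cmod (Ccomb 1 (F u) (-1) (F v)) <= Lip * l1dist n u v) /\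
  (exists M, forall u, Cmod (F u) <= M) /\
  (forall u l, (l < m)%nat -> L < Rabs (u l) -> F u = (0,0)).

Lemma admissible_setv n m L F t : (m <= n)%nat -> admissible n (S m) L F -> admissible n m L (fun u => F (setv u m t)).
Proof.
  intros Hm [[Lip HL] [[M HM] HZ]]. split; [|split].
  - exists (Rabs Lip). intros u v. eapply Rle_trans. apply HL.
    pose proof (l1dist_setv_le n m u v t). pose proof (l1dist_nonneg n (setv u m t) (setv v m t)).
    pose proof (Rle_abs Lip). pose proof (Rabs_pos Lip). nra.
  - exists M. intros; apply HM.
  - intros u l Hl Hu. apply (HZ _ l). lia. unfold setv. destruct (Nat.eqb l m) eqn:E; auto.
    apply Nat.eqb_eq in E; lia.
Qed.

Lemma admissible_Ccomb n m L F G a b : admissible n m L F -> admissible n m L G -> admissible n m L (fun u => Ccomb a (F u) b (G u)).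
Proof.
  intros [[K1 H1] [[M1 B1] Z1]] [[K2 H2] [[M2 B2] Z2]]. split; [|split].
  - exists (Rabs a * K1 + Rabs b * K2). intros u v.
    replace (Ccomb 1 (Ccomb a (F u) b (G u)) (-1) (Ccomb a (F v) b (G v))) with
      (Ccomb a (Ccomb 1 (F u) (-1) (F v)) b (Ccomb 1 (G u) (-1) (G v))).
    2: { unfold Ccomb; simpl. f_equal; ring. }
    eapply Rle_trans. apply Cmod_Ccomb.
    specialize (H1 u v). specialize (H2 u v).
    pose proof (Rabs_pos a). pose proof (Rabs_pos b). nra.
  - exists (Rabs a * M1 + Rabs b * M2). intros u. eapply Rle_trans. apply Cmod_Ccomb.
    specialize (B1 u). specialize (B2 u). pose proof (Rabs_pos a). pose proof (Rabs_pos b). nra.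
  - intros u l Hl Hu. rewrite (Z1 u l), (Z2 u l) by auto. unfold Ccomb; simpl. f_equal; ring.
Qed.

Lemma admissible_mono n m L L' F : L <= L' -> admissible n m L F -> admissible n m L' F.
Proof.
  intros H [A [B Z]]. split; [|split]; auto. intros u l Hl Hu. apply (Z u l); auto; lra.
Qed.

Lemma Cmod00 : Cmod (0,0) = 0.
Proof. apply Cmod_0. Qed.

Lemma Cmod_0_eq (z : C) : Cmod z <= 0 -> z = (0,0).
Proof. intros H. apply Cmod_eq_0. pose proof (Cmod_ge_0 z). lra. Qed.

Lemma im_le_Cmod (z : C) : Rabs (Im z) <= Cmod z.
Proof. pose proof (Rmax_Cmod z). destruct z; simpl in *. pose proof (Rmax_r (Rabs r) (Rabs r0)). lra. Qed.

Definition shiftv (k : nat) (s : R) (u : nat -> R) : nat -> R :=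
  fun l => if Nat.eqb l k then u l + s else u l.

Lemma shiftv_setv_same k s u t : shiftv k s (setv u k t) = setv u k (t + s).
Proof.
  apply functional_extensionality. intros l. unfold shiftv, setv.
  destruct (Nat.eqb l k); reflexivity.
Qed.

Lemma shiftv_setv_other k s u m t : m <> k -> shiftv k s (setv u m t) = setv (shiftv k s u) m t.
Proof.
  intros H. apply functional_extensionality. intros l. unfold shiftv, setv.
  destruct (Nat.eqb l k) eqn:E1; destruct (Nat.eqb l m) eqn:E2; auto.
  apply Nat.eqb_eq in E1, E2. lia.
Qed.

Definition intR_bounded (n m : nat) (L : R) : Prop :=
  forall F M, admissible n m L F -> (forall u, Cmod (F u) <= M) -> Cmod (intR m F) <= (4 * L) ^ m * M.

Definition intR_linear (n m : nat) (L : R) : Prop :=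
  forall F G a b, admissible n m L F -> admissible n m L G ->
    intR m (fun u => Ccomb a (F u) b (G u)) = Ccomb a (intR m F) b (intR m G).

Lemma intR_slice_regular n m L F : (m <= n)%nat ->
  intR_bounded n m L -> intR_linear n m L -> admissible n (S m) L F ->
  (exists K, lipschitz (fun t => fst (intR m (fun u => F (setv u m t)))) K /\
             lipschitz (fun t => snd (intR m (fun u => F (setv u m t)))) K) /\
  (forall t, L < Rabs t -> intR m (fun u => F (setv u m t)) = (0,0)).
Proof.
  intros Hm Hbound Hlin HF. split.
  - pose proof HF as [[Lip HLip] _]. exists ((4 * L) ^ m * Lip).
    assert (Hdiff : forall t s, Cmod (Ccomb 1 (intR m (fun u => F (setv u m t))) (-1)
                                            (intR m (fun u => F (setv u m s))))
                              <= (4 * L) ^ m * Lip * Rabs (t - s)).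
    { intros t s.
      assert (G1 : admissible n m L (fun u => F (setv u m t))) by (apply admissible_setv; auto).
      assert (G2 : admissible n m L (fun u => F (setv u m s))) by (apply admissible_setv; auto).
      rewrite <- (Hlin _ _ _ _ G1 G2), Rmult_assoc.
      apply Hbound. apply admissible_Ccomb; auto.
      intros u. eapply Rle_trans. apply HLip. rewrite l1dist_setv by auto. lra. }
    split; intros t s; (eapply Rle_trans; [| apply (Hdiff t s)]).
    + eapply Rle_trans; [| apply re_le_Cmod]; apply Req_le; f_equal; unfold Ccomb; simpl; ring.
    + eapply Rle_trans; [| apply im_le_Cmod]; apply Req_le; f_equal; unfold Ccomb; simpl; ring.
  - intros t Ht. apply Cmod_0_eq.
    replace 0 with ((4 * L) ^ m * 0) by ring. apply Hbound. apply admissible_setv; auto.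
    intros u. destruct HF as [_ [_ Z]]. rewrite (Z _ m); [rewrite Cmod00; lra|lia|].
    unfold setv. rewrite Nat.eqb_refl. auto.
Qed.

Lemma intR_bound_linear n m L : (m <= S n)%nat -> 0 <= L -> intR_bounded n m L /\ intR_linear n m L.
Proof.
  intros Hm HL. induction m.
  - split. intros F M _ H. simpl. rewrite Rmult_1_l. apply H.
    intros F G a b _ _. reflexivity.
  - destruct IHm as [Hbound Hlin]; [lia|].
    split.
    + intros F M HF HM. simpl intR. unfold CIntR, Re, Im.
      destruct (intR_slice_regular n m L F ltac:(lia) Hbound Hlin HF) as [[K [K1 K2]] Z].
      assert (HB : forall t, Cmod (intR m (fun u => F (setv u m t))) <= (4 * L) ^ m * M).
      { intros t. apply Hbound. apply admissible_setv; auto; lia. intros; apply HM. }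
      eapply Rle_trans. apply Cmod_le_abs_sum.
      assert (Rabs (RIntR (fun t => fst (intR m (fun u => F (setv u m t))))) <= 2 * L * ((4 * L) ^ m * M)).
      { apply RIntR_bound with K; auto. intros x Hx; rewrite Z; auto.
        intros x. eapply Rle_trans. apply re_le_Cmod. apply HB. }
      assert (Rabs (RIntR (fun t => snd (intR m (fun u => F (setv u m t))))) <= 2 * L * ((4 * L) ^ m * M)).
      { apply RIntR_bound with K; auto. intros x Hx; rewrite Z; auto.
        intros x. eapply Rle_trans. apply im_le_Cmod. apply HB. }
      replace ((4*L)^(S m) * M) with (2*L*((4*L)^m*M) + 2*L*((4*L)^m*M)) by (simpl; ring).
      unfold Re, Im. lra.
    + intros F G a b HF HG. simpl intR. unfold CIntR, Re, Im.
      destruct (intR_slice_regular n m L F ltac:(lia) Hbound Hlin HF) as [[K [K1 K2]] Z].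
      destruct (intR_slice_regular n m L G ltac:(lia) Hbound Hlin HG) as [[K' [K1' K2']] Z'].
      assert (Hslice : forall t, intR m (fun u => Ccomb a (F (setv u m t)) b (G (setv u m t))) =
                                Ccomb a (intR m (fun u => F (setv u m t))) b (intR m (fun u => G (setv u m t)))).
      { intros t. apply Hlin; apply admissible_setv; auto; lia. }
      rewrite (functional_extensionality _ _ (fun t => f_equal fst (Hslice t))).
      rewrite (functional_extensionality _ _ (fun t => f_equal snd (Hslice t))).
      unfold Ccomb; simpl fst; simpl snd.
      rewrite !(RIntR_lincomb _ _ K K' L) by (auto; intros x Hx; (rewrite Z || rewrite Z'); auto).
      reflexivity.
Qed.

Lemma intR_shiftv n k s : forall m, (k < m)%nat -> (m <= S n)%nat -> forall F L, 0 <= L ->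
  admissible n m L F -> intR m (fun u => F (shiftv k s u)) = intR m F.
Proof.
  induction m; intros Hk Hm F L HL HF. lia.
  simpl intR. unfold CIntR, Re, Im.
  destruct (Nat.eq_dec m k).
  - subst m.
    assert (E : forall t, intR k (fun u => F (shiftv k s (setv u k t))) = intR k (fun u => F (setv u k (t + s)))).
    { intros t. f_equal. apply functional_extensionality. intros u. rewrite shiftv_setv_same. reflexivity. }
    rewrite (functional_extensionality _ _ (fun t => f_equal fst (E t))).
    rewrite (functional_extensionality _ _ (fun t => f_equal snd (E t))).
    destruct (intR_bound_linear n k L ltac:(lia) HL) as [Hbound Hlin].
    destruct (intR_slice_regular n k L F ltac:(lia) Hbound Hlin HF) as [[K [K1 K2]] Z].
    f_equal.
    + apply (RIntR_shift (fun t => fst (intR k (fun u => F (setv u k t)))) L s); auto.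
      apply (lipschitz_continuous _ K); auto. intros x Hx; rewrite Z; auto.
    + apply (RIntR_shift (fun t => snd (intR k (fun u => F (setv u k t)))) L s); auto.
      apply (lipschitz_continuous _ K); auto. intros x Hx; rewrite Z; auto.
  - assert (E : forall t, intR m (fun u => F (shiftv k s (setv u m t))) = intR m (fun u => F (setv u m t))).
    { intros t. transitivity (intR m (fun u => (fun v => F (setv v m t)) (shiftv k s u))).
      f_equal. apply functional_extensionality. intros u. rewrite shiftv_setv_other; auto.
      exact (IHm ltac:(lia) ltac:(lia) (fun v => F (setv v m t)) L HL (admissible_setv n m L F t ltac:(lia) HF)). }
    rewrite (functional_extensionality _ _ (fun t => f_equal fst (E t))).
    rewrite (functional_extensionality _ _ (fun t => f_equal snd (E t))).
    reflexivity.
Qed.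

Lemma l1dist_shiftv n k s u v : l1dist n (shiftv k s u) (shiftv k s v) = l1dist n u v.
Proof.
  unfold l1dist. apply sumR_ext. intros l _. unfold shiftv. destruct (Nat.eqb l k); auto.
  f_equal. ring.
Qed.

Lemma admissible_shiftv n m L k s F : admissible n m L F -> admissible n m (L + Rabs s) (fun u => F (shiftv k s u)).
Proof.
  intros [[Lip HL] [[M HM] Z]]. split; [|split].
  - exists Lip. intros u v. rewrite <- (l1dist_shiftv n k s). apply HL.
  - exists M. intros; apply HM.
  - intros u l Hl Hu. apply (Z _ l Hl). unfold shiftv. destruct (Nat.eqb l k); auto.
    pose proof (Rabs_triang (u l + s) (-s)). rewrite Rabs_Ropp in H.
    replace (u l + s + - s) with (u l) in H by ring. lra.
    pose proof (Rabs_pos s). lra.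
Qed.

Lemma D_plus (f g : R -> R) x df dg : is_derive f x df -> is_derive g x dg ->
  is_derive (fun t => f t + g t) x (df + dg).
Proof. intros. apply (@is_derive_plus R_AbsRing R_NormedModule); auto. Qed.
Lemma D_minus (f g : R -> R) x df dg : is_derive f x df -> is_derive g x dg ->
  is_derive (fun t => f t - g t) x (df - dg).
Proof. intros. apply (@is_derive_minus R_AbsRing R_NormedModule); auto. Qed.
Lemma D_mult (f g : R -> R) x df dg : is_derive f x df -> is_derive g x dg ->
  is_derive (fun t => f t * g t) x (df * g x + f x * dg).
Proof. intros. apply (@is_derive_mult R_AbsRing); auto. intros; apply Rmult_comm. Qed.
Lemma D_scal (f : R -> R) x k df : is_derive f x df -> is_derive (fun t => k * f t) x (k * df).
Proof. apply is_derive_scal. Qed.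
Lemma D_const (c x : R) : is_derive (fun _ => c) x 0.
Proof. apply (@is_derive_const R_AbsRing R_NormedModule). Qed.
Lemma D_id (x : R) : is_derive (fun t => t) x 1.
Proof. apply (@is_derive_id R_AbsRing). Qed.
Lemma D_comp (f g : R -> R) x df dg : is_derive f (g x) df -> is_derive g x dg ->
  is_derive (fun t => f (g t)) x (dg * df).
Proof. intros. apply (@is_derive_comp R_AbsRing R_NormedModule); auto. Qed.
Lemma D_ext (f g : R -> R) x l : (forall t, f t = g t) -> is_derive f x l -> is_derive g x l.
Proof. apply (@is_derive_ext R_AbsRing R_NormedModule). Qed.
Lemma D_eq (f : R -> R) x (l l' : R) : @eq R l l' -> is_derive f x l -> is_derive f x l'.
Proof. intros ->; auto. Qed.
Lemma D_affine (f : R -> R) a b x df : is_derive f (a + b * x) df ->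
  is_derive (fun t => f (a + b * t)) x (b * df).
Proof.
  intros H. apply (D_comp f (fun t => a + b * t)); auto.
  apply (D_eq _ _ (0 + b * 1)). ring. apply D_plus. apply D_const. apply D_scal. apply D_id.
Qed.

Fixpoint dbounded (N : nat) (lam A : R) (f : R -> R) : Prop :=
  match N with
  | O => forall t, Rabs (f t) <= A
  | S N' => (forall t, Rabs (f t) <= A) /\
            exists f', (forall t, is_derive f t (f' t)) /\ dbounded N' lam (A * lam) f'
  end.

Lemma dbounded_bound N lam A f : dbounded N lam A f -> forall t, Rabs (f t) <= A.
Proof. destruct N; simpl; intros H; [exact H | apply H]. Qed.

Lemma dbounded_nonneg N lam A f : dbounded N lam A f -> 0 <= A.
Proof. intros H. pose proof (dbounded_bound _ _ _ _ H 0). pose proof (Rabs_pos (f 0)). lra. Qed.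

Lemma dbounded_pred N : forall lam A f, dbounded (S N) lam A f -> dbounded N lam A f.
Proof.
  induction N; intros lam A f H.
  - destruct H as [H _]; exact H.
  - destruct H as [B [f' [D H]]]. split; auto. exists f'. split; auto.
Qed.

Lemma dbounded_mono N : forall lam A A' f, 0 <= lam -> A <= A' -> dbounded N lam A f -> dbounded N lam A' f.
Proof.
  induction N; intros lam A A' f Hl HA H.
  - intros t. specialize (H t). lra.
  - destruct H as [B [f' [D H]]]. split. intros t; specialize (B t); lra.
    exists f'. split; auto. apply IHN with (A * lam); auto. nra.
Qed.

Lemma dbounded_rate_mono N : forall lam lam' A f, 0 <= lam -> lam <= lam' -> dbounded N lam A f -> dbounded N lam' A f.
Proof.
  induction N; intros lam lam' A f H0 Hl H; auto.
  destruct H as [B [f' [D H]]]. split; auto. exists f'. split; auto.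
  assert (0 <= A) by (pose proof (B 0); pose proof (Rabs_pos (f 0)); lra).
  apply dbounded_mono with (A * lam). lra. nra. apply IHN with lam; auto.
Qed.

Lemma dbounded_ext N lam A f g : (forall t, f t = g t) -> dbounded N lam A f -> dbounded N lam A g.
Proof. intros H. rewrite (functional_extensionality f g H). auto. Qed.

Lemma dbounded_plus N : forall lam A B f g, dbounded N lam A f -> dbounded N lam B g -> dbounded N lam (A + B) (fun t => f t + g t).
Proof.
  induction N; intros lam A B f g Hf Hg.
  - intros t. eapply Rle_trans. apply Rabs_triang. specialize (Hf t). specialize (Hg t). lra.
  - destruct Hf as [Bf [f' [Df Hf]]]. destruct Hg as [Bg [g' [Dg Hg]]]. split.
    + intros t. eapply Rle_trans. apply Rabs_triang. specialize (Bf t). specialize (Bg t). lra.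
    + exists (fun t => f' t + g' t). split. intros t; apply D_plus; auto.
      replace ((A + B) * lam) with (A * lam + B * lam) by ring. apply IHN; auto.
Qed.

Lemma dbounded_scal N : forall lam A c f, dbounded N lam A f -> dbounded N lam (Rabs c * A) (fun t => c * f t).
Proof.
  induction N; intros lam A c f Hf.
  - intros t. rewrite Rabs_mult. apply Rmult_le_compat_l. apply Rabs_pos. apply Hf.
  - destruct Hf as [Bf [f' [Df Hf]]]. split.
    + intros t. rewrite Rabs_mult. apply Rmult_le_compat_l. apply Rabs_pos. apply Bf.
    + exists (fun t => c * f' t). split. intros t; apply D_scal; auto.
      replace (Rabs c * A * lam) with (Rabs c * (A * lam)) by ring. apply IHN; auto.
Qed.

Lemma dbounded_affine N : forall lam A f a b, 0 <= lam -> Rabs b <= 1 -> dbounded N lam A f ->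
  dbounded N lam A (fun t => f (a + b * t)).
Proof.
  induction N; intros lam A f a b Hl Hb Hf.
  - intros t. apply Hf.
  - destruct Hf as [Bf [f' [Df Hf]]]. split.
    + intros t. apply Bf.
    + exists (fun t => b * f' (a + b * t)). split. intros t; apply D_affine; auto.
      apply dbounded_mono with (Rabs b * (A * lam)). auto.
      assert (0 <= A * lam) by (pose proof (Bf 0); pose proof (Rabs_pos (f 0)); nra).
      pose proof (Rabs_pos b). nra.
      apply (dbounded_scal N lam (A * lam) b (fun t => f' (a + b * t))). apply IHN; auto.
Qed.

Lemma dbounded_mult N : forall lam A B f g, 0 <= lam -> dbounded N lam A f -> dbounded N lam B g ->
  dbounded N lam (2 ^ N * A * B) (fun t => f t * g t).
Proof.
  induction N; intros lam A B f g Hl Hf Hg.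
  - intros t. rewrite Rabs_mult. simpl. specialize (Hf t). specialize (Hg t).
    pose proof (Rabs_pos (f t)). pose proof (Rabs_pos (g t)). nra.
  - pose proof (dbounded_nonneg _ _ _ _ Hf) as HA. pose proof (dbounded_nonneg _ _ _ _ Hg) as HB.
    pose proof (dbounded_pred _ _ _ _ Hf) as Hf0. pose proof (dbounded_pred _ _ _ _ Hg) as Hg0.
    destruct Hf as [Bf [f' [Df Hf]]]. destruct Hg as [Bg [g' [Dg Hg]]]. split.
    + intros t. rewrite Rabs_mult. specialize (Bf t). specialize (Bg t).
      pose proof (Rabs_pos (f t)). pose proof (Rabs_pos (g t)).
      assert (1 <= 2 ^ S N) by (apply pow_R1_Rle; lra).
      assert (Rabs (f t) * Rabs (g t) <= A * B) by (apply Rmult_le_compat; auto).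
      assert (0 <= A * B) by nra.
      assert (A * B <= 2 ^ S N * (A * B)) by nra.
      rewrite Rmult_assoc. lra.
    + exists (fun t => f' t * g t + f t * g' t). split. intros t; apply D_mult; auto.
      apply dbounded_mono with (2 ^ N * (A * lam) * B + 2 ^ N * A * (B * lam)). auto.
      simpl; lra.
      apply dbounded_plus; apply IHN; auto.
Qed.

Lemma dbounded1_lipschitz lam A f : dbounded 1 lam A f -> forall a b, Rabs (f b - f a) <= A * lam * Rabs (b - a).
Proof.
  intros [_ [f' [D H]]] a b.
  destruct (MVT_abs f f' a b) as [c [Hc _]].
  { intros c _. apply is_derive_Reals. apply D. }
  rewrite Hc. apply Rmult_le_compat_r. apply Rabs_pos. apply H.
Qed.

Lemma dbounded_1 N : forall lam A f, dbounded (S N) lam A f -> dbounded 1 lam A f.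
Proof. induction N; intros lam A f H; auto. apply IHN. apply dbounded_pred. exact H. Qed.

Definition fdiff (s : R) (f : R -> R) : R -> R := fun t => f (t + s) - f t.

Fixpoint fdiffN (j : nat) (s : R) (f : R -> R) : R -> R :=
  match j with O => f | S j' => fdiff s (fdiffN j' s f) end.

Lemma dbounded_fdiff N : forall lam A f s, 0 <= lam -> dbounded (S N) lam A f -> dbounded N lam (Rabs s * A * lam) (fdiff s f).
Proof.
  induction N; intros lam A f s Hl Hf.
  - intros t. unfold fdiff. pose proof (dbounded1_lipschitz _ _ _ Hf t (t + s)).
    replace (t + s - t) with s in H by ring. lra.
  - pose proof (dbounded1_lipschitz _ _ _ (dbounded_1 _ _ _ _ Hf)) as Hlip.
    destruct Hf as [Bf [f' [Df Hf]]]. split.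
    + intros t. unfold fdiff. pose proof (Hlip t (t + s)).
      replace (t + s - t) with s in H by ring. lra.
    + exists (fdiff s f'). split.
      * intros t. unfold fdiff. apply D_minus; auto.
        apply (D_eq _ _ (1 * f' (t + s))). ring.
        apply (D_comp f (fun x => x + s)). apply Df.
        apply (D_eq _ _ (1 + 0)). ring. apply D_plus. apply D_id. apply D_const.
      * replace (Rabs s * A * lam * lam) with (Rabs s * (A * lam) * lam) by ring.
        apply IHN; auto.
Qed.

Lemma dbounded_fdiffN j : forall r lam A f s, 0 <= lam -> dbounded (j + r) lam A f ->
  dbounded r lam (Rabs s ^ j * A * lam ^ j) (fdiffN j s f).
Proof.
  induction j; intros r lam A f s Hl H.
  - simpl. replace (1 * A * 1) with A by ring. exact H.
  - simpl fdiffN. rewrite Nat.add_succ_comm in H.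
    pose proof (IHj (S r) lam A f s Hl H) as H1.
    pose proof (dbounded_fdiff r lam _ _ s Hl H1).
    replace (Rabs s ^ S j * A * lam ^ S j) with (Rabs s * (Rabs s ^ j * A * lam ^ j) * lam) by (simpl; ring).
    exact H0.
Qed.

Lemma fdiffN_bound N lam A f s : 0 <= lam -> dbounded N lam A f ->
  forall t, Rabs (fdiffN N s f t) <= Rabs s ^ N * A * lam ^ N.
Proof.
  intros Hl H. apply (dbounded_bound 0 lam). apply dbounded_fdiffN; auto. rewrite Nat.add_0_r. exact H.
Qed.

Fixpoint peval (p : list R) (y : R) : R :=
  match p with nil => 0 | a :: q => a + y * peval q y end.

Fixpoint padd (p q : list R) : list R :=
  match p, q with
  | nil, _ => q
  | _, nil => p
  | a :: p', b :: q' => (a + b) :: padd p' q'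
  end.

Definition pscal (c : R) (p : list R) : list R := map (fun a => c * a) p.

Fixpoint pderiv (p : list R) : list R :=
  match p with nil => nil | a :: q => padd q (0 :: pderiv q) end.

Lemma peval_padd p : forall q y, peval (padd p q) y = peval p y + peval q y.
Proof.
  induction p; intros q y; simpl. ring.
  destruct q; simpl. ring. rewrite IHp. ring.
Qed.

Lemma peval_pscal c p y : peval (pscal c p) y = c * peval p y.
Proof. induction p; simpl. ring. rewrite IHp. ring. Qed.

Lemma peval_deriv p y : is_derive (peval p) y (peval (pderiv p) y).
Proof.
  induction p; simpl.
  - apply D_const.
  - rewrite peval_padd. simpl.
    apply (D_eq _ _ (0 + (1 * peval p y + y * peval (pderiv p) y))). ring.
    apply D_plus. apply D_const. apply D_mult. apply D_id. exact IHp.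
Qed.

Lemma peval_bound p : exists C k, 0 <= C /\ forall y, 1 <= y -> Rabs (peval p y) <= C * y ^ k.
Proof.
  induction p as [|a p IH].
  - exists 0, O. split. lra. intros y _. simpl. rewrite Rabs_R0. lra.
  - destruct IH as [C [k [HC H]]]. exists (Rabs a + C), (S k). split. pose proof (Rabs_pos a); lra.
    intros y Hy. simpl. eapply Rle_trans. apply Rabs_triang. rewrite Rabs_mult.
    specialize (H y Hy). rewrite (Rabs_right y) by lra.
    assert (1 <= y ^ k) by (apply pow_R1_Rle; lra).
    assert (y * Rabs (peval p y) <= y * (C * y ^ k)) by (apply Rmult_le_compat_l; lra).
    assert (1 <= y * y ^ k) by nra.
    assert (Rabs a * 1 <= Rabs a * (y * y ^ k)) by (apply Rmult_le_compat_l; [apply Rabs_pos|lra]).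
    nra.
Qed.

Lemma exp_INR_mult n z : exp (INR n * z) = exp z ^ n.
Proof.
  induction n. simpl. replace (0 * z) with 0 by ring. apply exp_0.
  rewrite S_INR. replace ((INR n + 1) * z) with (INR n * z + z) by ring.
  rewrite exp_plus, IHn. simpl. ring.
Qed.

Lemma exp_ge_pow j y : 0 <= y -> (y / INR (S j)) ^ S j <= exp y.
Proof.
  intros Hy. assert (HS : 0 < INR (S j)) by (apply lt_0_INR; lia).
  replace y with (INR (S j) * (y / INR (S j))) at 2 by (field; lra).
  rewrite exp_INR_mult. apply pow_incr. split.
  apply Rdiv_le_0_compat; lra.
  pose proof (exp_ineq1_le (y / INR (S j))). assert (0 <= y / INR (S j)) by (apply Rdiv_le_0_compat; lra). lra.
Qed.

Lemma pow_exp_decay k y : 0 < y -> y ^ k * exp (- y) <= INR (S k) ^ S k / y.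
Proof.
  intros Hy. pose proof (exp_ge_pow k y ltac:(lra)) as H.
  set (K := INR (S k)) in *.
  assert (HS : 0 < K) by (apply lt_0_INR; lia).
  unfold Rdiv in H. rewrite Rpow_mult_distr in H. rewrite pow_inv in H.
  assert (HK : 0 < K ^ S k) by (apply pow_lt; lra).
  assert (H2 : y ^ S k <= K ^ S k * exp y).
  { apply Rmult_le_reg_r with (/ K ^ S k). apply Rinv_0_lt_compat; lra.
    replace (K ^ S k * exp y * / K ^ S k) with (exp y) by (field; lra). exact H. }
  assert (He : 0 < exp y) by apply exp_pos.
  rewrite exp_Ropp.
  apply Rmult_le_reg_r with (exp y * y). nra.
  replace (y ^ k * / exp y * (exp y * y)) with (y ^ S k) by (simpl; field; lra).
  replace (K ^ S k / y * (exp y * y)) with (K ^ S k * exp y) by (field; lra).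
  exact H2.
Qed.

(* [p(1/s) exp(-1/s)] for [s > 0], [0] otherwise; this class is closed under differentiation,
   which gives the smoothness of [omega0]. *)
Definition flatexp (p : list R) (s : R) : R :=
  if Rlt_dec 0 s then peval p (/ s) * exp (- / s) else 0.

Definition flatexp_dpoly (p : list R) : list R := 0 :: 0 :: padd p (pscal (-1) (pderiv p)).

Lemma D_inv s : s <> 0 -> is_derive (fun t => / t) s (- / (s * s)).
Proof.
  intros H. apply (D_eq _ _ (- 1 / s ^ 2)). field; auto.
  apply (is_derive_inv (fun t => t) s 1). apply D_id. auto.
Qed.

Lemma flatexp_deriv_pos p s : 0 < s -> is_derive (flatexp p) s (flatexp (flatexp_dpoly p) s).
Proof.
  intros Hs.
  apply (is_derive_ext_loc (fun t => peval p (/ t) * exp (- / t))).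
  { apply (locally_interval _ s 0 p_infty); simpl; auto.
    intros y Hy _. unfold flatexp. destruct (Rlt_dec 0 y); [reflexivity | lra]. }
  unfold flatexp. destruct (Rlt_dec 0 s) as [_|]; [|lra].
  unfold flatexp_dpoly. simpl peval. rewrite peval_padd, peval_pscal.
  apply (D_eq _ _ ((- / (s * s)) * peval (pderiv p) (/ s) * exp (- / s) +
                  peval p (/ s) * ((- - / (s * s)) * exp (- / s)))).
  { field. lra. }
  apply (D_mult (fun t => peval p (/ t)) (fun t => exp (- / t))).
  - apply (D_comp (peval p) (fun t => / t)). apply peval_deriv. apply D_inv. lra.
  - apply (D_comp exp (fun t => - / t)). apply is_derive_exp.
    apply (D_ext (fun t => -1 * / t)). intros; ring.
    apply (D_eq _ _ (-1 * (- / (s * s)))). ring. apply D_scal. apply D_inv. lra.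
Qed.

Lemma flatexp_deriv_neg p s : s < 0 -> is_derive (flatexp p) s (flatexp (flatexp_dpoly p) s).
Proof.
  intros Hs.
  apply (is_derive_ext_loc (fun _ => 0)).
  { apply (locally_interval _ s m_infty 0); simpl; auto.
    intros y _ Hy. unfold flatexp. destruct (Rlt_dec 0 y); [lra | reflexivity]. }
  unfold flatexp. destruct (Rlt_dec 0 s); [lra|]. apply D_const.
Qed.

Lemma flatexp_deriv0 p : is_derive (flatexp p) 0 (flatexp (flatexp_dpoly p) 0).
Proof.
  unfold flatexp at 2. destruct (Rlt_dec 0 0); [lra|].
  apply is_derive_Reals. intros eps Heps.
  destruct (peval_bound p) as [C [k [HC Hb]]].
  set (K := INR (S (S k)) ^ S (S k)).
  assert (HK : 0 < K) by (apply pow_lt; apply lt_0_INR; lia).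
  assert (Hd : 0 < Rmin 1 (eps / (C * K + 1))).
  { apply Rmin_pos. lra. apply Rdiv_lt_0_compat. lra. nra. }
  exists (mkposreal _ Hd). intros h Hh0 Hh. simpl in Hh.
  unfold flatexp. destruct (Rlt_dec 0 0); [lra|].
  destruct (Rlt_dec 0 (0 + h)) as [Hp|Hn].
  - replace (0 + h) with h in * by ring.
    rewrite Rabs_right in Hh by lra.
    assert (Hh1 : h < 1) by (pose proof (Rmin_l 1 (eps / (C * K + 1))); lra).
    assert (Hh2 : h < eps / (C * K + 1)) by (pose proof (Rmin_r 1 (eps / (C * K + 1))); lra).
    set (y := / h).
    assert (Hy : 1 <= y) by (unfold y; rewrite <- Rinv_1; apply Rinv_le_contravar; lra).
    replace ((peval p y * exp (- y) - 0) / h - 0) with (y * peval p y * exp (- y)) by (unfold y; field; lra).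
    pose proof (pow_exp_decay (S k) y ltac:(lra)) as Hd2. fold K in Hd2.
    pose proof (Hb y Hy) as Hb2.
    rewrite !Rabs_mult. rewrite (Rabs_right y) by lra. rewrite (Rabs_right (exp (- y))) by (left; apply exp_pos).
    assert (He : 0 < exp (- y)) by apply exp_pos.
    assert (y * Rabs (peval p y) * exp (- y) <= y * (C * y ^ k) * exp (- y)).
    { apply Rmult_le_compat_r. lra. apply Rmult_le_compat_l; lra. }
    assert (y * (C * y ^ k) * exp (- y) = C * (y ^ S k * exp (- y))) by (simpl; ring).
    assert (C * (y ^ S k * exp (- y)) <= C * (K / y)) by (apply Rmult_le_compat_l; auto).
    assert (K / y = K * h) by (unfold y; field; lra).
    assert (C * (K * h) <= (C * K + 1) * h) by nra.
    assert ((C * K + 1) * h < eps).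
    { apply Rmult_lt_reg_r with (/ (C * K + 1)). apply Rinv_0_lt_compat; nra.
      replace ((C * K + 1) * h * / (C * K + 1)) with h by (field; nra). exact Hh2. }
    rewrite H2 in H1. lra.
  - replace ((0 - 0) / h - 0) with 0 by (field; auto). rewrite Rabs_R0. auto.
Qed.

Fixpoint smooth (N : nat) (f : R -> R) : Prop :=
  match N with
  | O => True
  | S N' => exists f', (forall x, is_derive f x (f' x)) /\ smooth N' f'
  end.

Lemma smooth_pred N : forall f, smooth (S N) f -> smooth N f.
Proof.
  induction N; intros f H; simpl; auto.
  destruct H as [f' [D H]]. exists f'. split; auto.
Qed.

Lemma smooth_ext N f g : (forall x, f x = g x) -> smooth N f -> smooth N g.
Proof. intros H. rewrite (functional_extensionality f g H). auto. Qed.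

Lemma smooth_const N c : smooth N (fun _ => c).
Proof.
  revert c. induction N; intros c; simpl; auto. exists (fun _ => 0). split; auto. intros; apply D_const.
Qed.

Lemma smooth_plus N : forall f g, smooth N f -> smooth N g -> smooth N (fun x => f x + g x).
Proof.
  induction N; intros f g Hf Hg; simpl; auto.
  destruct Hf as [f' [Df Hf]]. destruct Hg as [g' [Dg Hg]].
  exists (fun x => f' x + g' x). split. intros; apply D_plus; auto. apply IHN; auto.
Qed.

Lemma smooth_mult N : forall f g, smooth N f -> smooth N g -> smooth N (fun x => f x * g x).
Proof.
  induction N; intros f g Hf Hg; simpl; auto.
  pose proof (smooth_pred _ _ Hf) as Hf0. pose proof (smooth_pred _ _ Hg) as Hg0.
  destruct Hf as [f' [Df Hf]]. destruct Hg as [g' [Dg Hg]].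
  exists (fun x => f' x * g x + f x * g' x). split. intros; apply D_mult; auto.
  apply smooth_plus; apply IHN; auto.
Qed.

Lemma smooth_comp N : forall f g, smooth N f -> smooth N g -> smooth N (fun x => f (g x)).
Proof.
  induction N; intros f g Hf Hg; simpl; auto.
  pose proof (smooth_pred _ _ Hg) as Hg0.
  destruct Hf as [f' [Df Hf]]. destruct Hg as [g' [Dg Hg]].
  exists (fun x => g' x * f' (g x)). split. intros; apply D_comp; auto.
  apply smooth_mult; auto.
Qed.

Lemma smooth_id N : smooth N (fun x => x).
Proof.
  destruct N; simpl; auto. exists (fun _ => 1). split. intros; apply D_id. apply smooth_const.
Qed.

Fixpoint flatexp_poly (m : nat) : list R := match m with O => 1 :: nil | S m' => flatexp_dpoly (flatexp_poly m') end.

Lemma flatexp_deriv p s : is_derive (flatexp p) s (flatexp (flatexp_dpoly p) s).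
Proof.
  destruct (Rtotal_order s 0) as [H|[H|H]].
  apply flatexp_deriv_neg; auto. subst; apply flatexp_deriv0. apply flatexp_deriv_pos; auto.
Qed.

Lemma smooth_flatexp N : forall m, smooth N (flatexp (flatexp_poly m)).
Proof.
  induction N; intros m; simpl; auto. exists (flatexp (flatexp_poly (S m))). split; auto.
  intros; apply flatexp_deriv.
Qed.

Lemma omega0_flatexp x : omega0 x = flatexp (flatexp_poly 0) (1 - x * x).
Proof.
  unfold omega0, flatexp. simpl flatexp_poly. simpl peval.
  destruct (Rlt_dec (Rabs x) 1) as [H|H]; destruct (Rlt_dec 0 (1 - x * x)) as [H'|H'].
  - replace (x ^ 2) with (x * x) by ring. ring.
  - exfalso. apply H'. assert (Rabs x * Rabs x < 1).
    { pose proof (Rabs_pos x). nra. }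
    rewrite <- Rabs_mult in H0. rewrite Rabs_right in H0. lra. nra.
  - exfalso. apply H. apply Rnot_le_lt. intros Hle.
    assert (1 <= Rabs x * Rabs x) by nra. rewrite <- Rabs_mult in H0. rewrite Rabs_right in H0. lra. nra.
  - reflexivity.
Qed.

Lemma smooth_omega0 N : smooth N omega0.
Proof.
  apply (smooth_ext N (fun x => flatexp (flatexp_poly 0) (1 - x * x))). intros; symmetry; apply omega0_flatexp.
  apply (smooth_comp N (flatexp (flatexp_poly 0)) (fun x => 1 - x * x)). apply smooth_flatexp.
  apply (smooth_ext N (fun x => 1 + (-1) * (x * x))). intros; ring.
  apply smooth_plus. apply smooth_const. apply smooth_mult. apply smooth_const. apply smooth_mult; apply smooth_id.
Qed.

Lemma smooth_derivs N : forall f, smooth N f -> exists D : nat -> R -> R, D O = f /\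
  forall m x, (m < N)%nat -> is_derive (D m) x (D (S m) x).
Proof.
  induction N; intros f H.
  - exists (fun _ => f). split; auto. intros; lia.
  - destruct H as [f' [Df H]]. destruct (IHN f' H) as [D [HD0 HD]].
    exists (fun m => match m with O => f | S m' => D m' end). split; auto.
    intros m x Hm. destruct m. rewrite <- HD0 in Df. apply Df. apply HD. lia.
Qed.

Lemma is_derive_locally_zero (f df : R -> R) x : is_derive f x (df x) -> locally x (fun t => f t = 0) -> df x = 0.
Proof.
  intros H1 H2.
  assert (H3 : is_derive f x 0).
  { apply (is_derive_ext_loc (fun _ => 0)). apply (filter_imp (fun t => f t = 0)); auto.
    apply D_const. }
  pose proof (is_derive_unique f x _ H1). pose proof (is_derive_unique f x _ H3). congruence.
Qed.

Lemma derivs_uniform_bound N (D : nat -> R -> R) :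
  (forall m, (m <= N)%nat -> exists C, forall x, Rabs (D m x) <= C) ->
  exists C, 0 <= C /\ forall m x, (m <= N)%nat -> Rabs (D m x) <= C.
Proof.
  induction N; intros H.
  - destruct (H O (le_n _)) as [C HC]. exists (Rabs C). split. apply Rabs_pos.
    intros m x Hm. assert (m = O) by lia. subst. eapply Rle_trans. apply HC. apply Rle_abs.
  - destruct IHN as [C [HC0 HC]]. intros; apply H; lia.
    destruct (H (S N) (le_n _)) as [C' HC']. exists (Rmax C (Rabs C')). split.
    eapply Rle_trans. apply HC0. apply Rmax_l.
    intros m x Hm. destruct (Nat.eq_dec m (S N)).
    + subst. eapply Rle_trans. apply HC'. eapply Rle_trans. apply Rle_abs. apply Rmax_r.
    + eapply Rle_trans. apply HC. lia. apply Rmax_l.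
Qed.

Lemma omega0_family N : exists D : nat -> R -> R, D O = omega0 /\
  (forall m x, (m < N)%nat -> is_derive (D m) x (D (S m) x)) /\
  (exists C, 0 <= C /\ forall m x, (m <= N)%nat -> Rabs (D m x) <= C).
Proof.
  destruct (smooth_derivs (S N) omega0 (smooth_omega0 (S N))) as [D [HD0 HD]].
  exists D. split; auto. split. intros; apply HD; lia.
  assert (Hz : forall m x, (m <= N)%nat -> 1 < Rabs x -> D m x = 0).
  { induction m; intros x Hm Hx.
    - rewrite HD0. unfold omega0. destruct (Rlt_dec (Rabs x) 1); [lra| reflexivity].
    - apply (is_derive_locally_zero (D m) (D (S m))). apply HD; lia.
      destruct (Rle_lt_dec 0 x).
      + rewrite Rabs_right in Hx by lra.
        apply (locally_interval _ x 1 p_infty); simpl; auto.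
        intros y Hy _. apply IHm. lia. rewrite Rabs_right; lra.
      + rewrite Rabs_left in Hx by lra.
        apply (locally_interval _ x m_infty (-1)); simpl; auto; try lra.
        intros y _ Hy. apply IHm. lia. rewrite Rabs_left; lra. }
  apply derivs_uniform_bound. intros m Hm.
  assert (Hc : forall x, continuous (D m) x).
  { intros x. apply (@ex_derive_continuous R_AbsRing R_NormedModule). exists (D (S m) x). apply HD. lia. }
  destruct (continuity_ab_maj (fun x => Rabs (D m x)) (-1) 1) as [Mx [HM _]]. lra.
  { intros c _. apply continuity_pt_filterlim. apply continuous_Rabs_comp. apply Hc. }
  exists (Rabs (D m Mx)). intros x.
  destruct (Rle_lt_dec (Rabs x) 1).
  - apply HM. apply Rabs_le_between in r. auto.
  - rewrite Hz by auto. rewrite Rabs_R0. apply Rabs_pos.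
Qed.

Lemma omega0_cont x : continuous omega0 x.
Proof.
  destruct (smooth_omega0 1) as [f' [D _]]. apply (@ex_derive_continuous R_AbsRing R_NormedModule).
  exists (f' x). apply D.
Qed.

Lemma omega0_le1 x : Rabs (omega0 x) <= 1.
Proof.
  unfold omega0. destruct (Rlt_dec (Rabs x) 1).
  - rewrite Rabs_right by (left; apply exp_pos).
    assert (0 < 1 - x ^ 2).
    { assert (Rabs x * Rabs x < 1) by (pose proof (Rabs_pos x); nra).
      rewrite <- Rabs_mult in H. rewrite Rabs_right in H by nra. simpl. lra. }
    assert (- / (1 - x ^ 2) < 0). { assert (0 < / (1 - x^2)) by (apply Rinv_0_lt_compat; lra). lra. }
    apply exp_increasing in H0. rewrite exp_0 in H0. lra.
  - rewrite Rabs_R0. lra.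
Qed.

Lemma omega0_zero x : 1 <= Rabs x -> omega0 x = 0.
Proof. intros H. unfold omega0. destruct (Rlt_dec (Rabs x) 1); [lra|auto]. Qed.

Definition Omega0 (a : R) : R := RInt omega0 (-1) a.

Lemma ex_RInt_omega0 a b : ex_RInt omega0 a b.
Proof. apply (@ex_RInt_continuous R_CompleteNormedModule). intros; apply omega0_cont. Qed.

Lemma omega_eps_Omega0 eps z : omega_eps eps z = / c0 * Omega0 (z / eps - 1).
Proof.
  unfold omega_eps. f_equal. unfold Omega0.
  apply is_RInt_gen_unique.
  intros P HP. unfold filtermapi.
  apply Filter_prod with (fun a => a < -1) (fun b => b = z / eps - 1).
  - exists (-1). auto.
  - reflexivity.
  - intros a b Ha Hb. exists (RInt omega0 a b). split.
    + apply (@RInt_correct R_CompleteNormedModule). apply ex_RInt_omega0.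
    + simpl. subst b. rewrite <- (RInt_Chasles omega0 a (-1)) by apply ex_RInt_omega0.
      rewrite (RInt_vanishing omega0 a (-1)).
      change (0 + RInt omega0 (-1) (z / eps - 1)) with (0 + RInt omega0 (-1) (z / eps - 1)).
      rewrite Rplus_0_l. apply locally_singleton. exact HP.
      intros x Hx. rewrite Rmin_left in Hx by lra. rewrite Rmax_right in Hx by lra.
      apply omega0_zero. rewrite Rabs_left; lra.
Qed.

Lemma Omega0_deriv x : is_derive Omega0 x (omega0 x).
Proof.
  apply (is_derive_RInt omega0 Omega0 (-1)).
  - apply filter_forall. intros b. apply (@RInt_correct R_CompleteNormedModule). apply ex_RInt_omega0.
  - apply omega0_cont.
Qed.

Lemma Omega0_zero a : a <= -1 -> Omega0 a = 0.
Proof.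
  intros H. unfold Omega0. apply RInt_vanishing. intros x Hx.
  rewrite Rmin_right in Hx by lra. rewrite Rmax_left in Hx by lra.
  apply omega0_zero. rewrite Rabs_left; lra.
Qed.

Lemma Omega0_bound a : Rabs (Omega0 a) <= 2.
Proof.
  destruct (Rle_lt_dec a (-1)).
  - rewrite (Omega0_zero a r). rewrite Rabs_R0. lra.
  - destruct (Rle_lt_dec a 1).
    + unfold Omega0. eapply Rle_trans. apply (abs_RInt_le_const omega0 (-1) a 1). lra. apply ex_RInt_omega0.
      intros; apply omega0_le1. lra.
    + unfold Omega0. rewrite <- (RInt_Chasles omega0 (-1) 1 a) by apply ex_RInt_omega0.
      rewrite (RInt_vanishing omega0 1 a).
      change (Rabs (RInt omega0 (-1) 1 + 0) <= 2). rewrite Rplus_0_r.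
      eapply Rle_trans. apply (abs_RInt_le_const omega0 (-1) 1 1). lra. apply ex_RInt_omega0.
      intros; apply omega0_le1. lra.
      intros x Hx. rewrite Rmin_left in Hx by lra. rewrite Rmax_right in Hx by lra.
      apply omega0_zero. rewrite Rabs_right; lra.
Qed.

Lemma derivs_dbounded N : forall (D : nat -> R -> R) lam A,
  (forall m x, (m < N)%nat -> is_derive (D m) x (D (S m) x)) ->
  (forall m x, (m <= N)%nat -> Rabs (D m x) <= A * lam ^ m) -> dbounded N lam A (D O).
Proof.
  induction N; intros D lam A HD HB.
  - intros t. specialize (HB O t (le_n _)). simpl in HB. lra.
  - split. intros t. specialize (HB O t ltac:(lia)). simpl in HB. lra.
    exists (D 1%nat). split. intros; apply HD; lia.
    apply (IHN (fun m => D (S m))). intros; apply HD; lia.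
    intros m x Hm. specialize (HB (S m) x ltac:(lia)). simpl in HB. rewrite Rmult_assoc. exact HB.
Qed.

Lemma omega_eps_dbounded N eps : 0 < eps -> exists A, 0 <= A /\ dbounded N (/ eps) A (omega_eps eps).
Proof.
  intros He.
  destruct (omega0_family N) as [D [HD0 [HD [C [HC0 HC]]]]].
  set (Of := fun m => match m with O => Omega0 | S m' => D m' end).
  set (E := fun m z => / c0 * (/ eps) ^ m * Of m (-1 + / eps * z)).
  exists (Rabs (/ c0) * Rmax 2 C). split.
  { pose proof (Rabs_pos (/ c0)). pose proof (Rmax_l 2 C). nra. }
  apply (dbounded_ext N _ _ (E O)).
  { intros z. unfold E. simpl. rewrite omega_eps_Omega0. rewrite Rmult_1_r. f_equal. f_equal. field. lra. }
  apply derivs_dbounded.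
  - intros m x Hm. unfold E.
    apply (D_eq _ _ (/ c0 * (/ eps) ^ m * (/ eps * Of (S m) (-1 + / eps * x)))).
    simpl. ring.
    apply D_scal. apply D_affine.
    destruct m; simpl Of.
    + rewrite HD0. apply Omega0_deriv.
    + apply HD. lia.
  - intros m x Hm. unfold E. rewrite !Rabs_mult. rewrite <- RPow_abs.
    rewrite (Rabs_right (/ eps)) by (left; apply Rinv_0_lt_compat; lra).
    assert (Rabs (Of m (-1 + / eps * x)) <= Rmax 2 C).
    { destruct m; simpl Of.
      - eapply Rle_trans. apply Omega0_bound. apply Rmax_l.
      - eapply Rle_trans. apply HC. lia. apply Rmax_r. }
    assert (0 <= (/ eps) ^ m) by (apply pow_le; left; apply Rinv_0_lt_compat; lra).
    pose proof (Rabs_pos (/ c0)). pose proof (Rabs_pos (Of m (-1 + / eps * x))).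
    apply Rle_trans with (Rabs (/ c0) * (/ eps) ^ m * Rmax 2 C).
    apply Rmult_le_compat_l. nra. auto. lra.
Qed.

Lemma omega_eps_zero eps z : 0 < eps -> z <= 0 -> omega_eps eps z = 0.
Proof.
  intros He Hz. rewrite omega_eps_Omega0. rewrite Omega0_zero. ring.
  assert (z / eps <= 0). { unfold Rdiv. assert (0 < / eps) by (apply Rinv_0_lt_compat; lra). nra. }
  lra.
Qed.

Fixpoint fsum (M : nat) (f : nat -> R) : R :=
  match M with O => 0 | S M' => fsum M' f + f M' end.

Lemma sum_n_fsum (a : nat -> R) k : sum_n a k = fsum (S k) a.
Proof.
  induction k. rewrite sum_O. simpl. ring.
  rewrite sum_Sn. rewrite IHk. simpl. change (plus (0 + a 0%nat + 0) 0) with 0. reflexivity.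
Qed.

Lemma fsum_zero_tail (a : nat -> R) M : (forall j, (M <= j)%nat -> a j = 0) ->
  forall k, (M <= k)%nat -> fsum k a = fsum M a.
Proof.
  intros H k Hk. induction Hk. reflexivity. simpl. rewrite IHHk, H by lia. ring.
Qed.

Lemma Series_fsum (a : nat -> R) M : (forall j, (M <= j)%nat -> a j = 0) -> Series a = fsum M a.
Proof.
  intros H. apply is_series_unique. unfold is_series.
  apply (filterlim_ext_loc (fun _ => fsum M a)).
  - exists M. intros k Hk. rewrite sum_n_fsum. symmetry. apply fsum_zero_tail; auto.
  - apply filterlim_const.
Qed.

Lemma fsum_ext M f g : (forall j, (j < M)%nat -> f j = g j) -> fsum M f = fsum M g.
Proof. induction M; simpl; intros H; auto. rewrite IHM, H; auto. Qed.

Lemma fsum_plus M f g : fsum M (fun j => f j + g j) = fsum M f + fsum M g.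
Proof. induction M; simpl; try rewrite IHM; ring. Qed.

Lemma fsum_scal M c f : fsum M (fun j => c * f j) = c * fsum M f.
Proof. induction M; simpl; try rewrite IHM; ring. Qed.

Lemma fsum_abs M f : Rabs (fsum M f) <= fsum M (fun j => Rabs (f j)).
Proof.
  induction M; simpl. rewrite Rabs_R0; lra.
  eapply Rle_trans. apply Rabs_triang. lra.
Qed.

Lemma fsum_le M f g : (forall j, (j < M)%nat -> f j <= g j) -> fsum M f <= fsum M g.
Proof.
  induction M; simpl; intros H. lra. apply Rplus_le_compat. apply IHM; auto. apply H; lia.
Qed.

Lemma is_derive_fsum M (F : nat -> R -> R) (dF : nat -> R -> R) y :
  (forall j, is_derive (F j) y (dF j y)) ->
  is_derive (fun t => fsum M (fun j => F j t)) y (fsum M (fun j => dF j y)).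
Proof.
  intros H. induction M; simpl.
  - apply (@is_derive_const R_AbsRing R_NormedModule).
  - apply (@is_derive_plus R_AbsRing R_NormedModule); auto.
Qed.

Lemma fsum_invsq_S M : fsum (S M) (fun j => / (INR (S j) * INR (S j))) <= 2 - / INR (S M).
Proof.
  induction M.
  - simpl. lra.
  - cbn [fsum]. cbn [fsum] in IHM.
    set (x := INR (S M)) in *.
    assert (H1 : 0 < x) by (apply lt_0_INR; lia).
    assert (H2 : INR (S (S M)) = x + 1) by (unfold x; rewrite (S_INR (S M)); ring).
    rewrite H2.
    assert (/ ((x + 1) * (x + 1)) <= / x - / (x + 1)).
    { apply Rmult_le_reg_r with ((x + 1) * (x + 1) * x).
      apply Rmult_lt_0_compat; nra.
      field_simplify; try lra. }
    lra.
Qed.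

Lemma fsum_invsq M : fsum M (fun j => / (INR (S j) * INR (S j))) <= 2.
Proof.
  destruct M. simpl; lra. pose proof (fsum_invsq_S M).
  assert (0 < / INR (S M)) by (apply Rinv_0_lt_compat; apply lt_0_INR; lia). lra.
Qed.

Lemma fsum_abs_support_bound M (f : nat -> R) (Bf alpha beta : R) :
  0 <= Bf ->
  (forall j, f j <> 0 -> alpha < INR (S j) < beta) ->
  (forall j, Rabs (f j) <= Bf) ->
  fsum M (fun j => Rabs (f j)) <= Bf * Rmax 0 (Rmin (INR M) beta + 1 - alpha).
Proof.
  intros HB Hs Hb. induction M.
  - simpl. assert (0 <= Rmax 0 (Rmin 0 beta + 1 - alpha)) by apply Rmax_l. nra.
  - simpl fsum.
    destruct (Req_dec (f M) 0) as [E|E].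
    + rewrite E, Rabs_R0, Rplus_0_r. eapply Rle_trans. apply IHM.
      apply Rmult_le_compat_l; auto.
      assert (Rmin (INR M) beta <= Rmin (INR (S M)) beta).
      { rewrite S_INR. unfold Rmin. destruct (Rle_dec (INR M) beta); destruct (Rle_dec (INR M + 1) beta); lra. }
      unfold Rmax. destruct (Rle_dec 0 (Rmin (INR M) beta + 1 - alpha)); destruct (Rle_dec 0 (Rmin (INR (S M)) beta + 1 - alpha)); lra.
    + destruct (Hs M E) as [Ha Hb2].
      rewrite S_INR in *.
      assert (Rmin (INR M) beta = INR M) by (apply Rmin_left; lra).
      assert (Rmin (INR M + 1) beta = INR M + 1) by (apply Rmin_left; lra).
      rewrite H0. rewrite H in IHM.
      rewrite Rmax_right in IHM by lra. rewrite Rmax_right by lra.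
      specialize (Hb M). nra.
Qed.

Lemma fsum_support_bound M (f : nat -> R) (Bf alpha beta : R) :
  0 <= Bf -> alpha <= beta ->
  (forall j, f j <> 0 -> alpha < INR (S j) < beta) ->
  (forall j, Rabs (f j) <= Bf) ->
  Rabs (fsum M f) <= Bf * (beta + 1 - alpha).
Proof.
  intros HB Hab Hs Hb. eapply Rle_trans. apply fsum_abs. eapply Rle_trans. apply fsum_abs_support_bound; eauto.
  apply Rmult_le_compat_l; auto.
  assert (Rmin (INR M) beta <= beta) by apply Rmin_r.
  unfold Rmax. destruct (Rle_dec 0 (Rmin (INR M) beta + 1 - alpha)); lra.
Qed.

(* The [m]-th derivative of [omega] when [D0 m] is that of [omega0]. *)
Definition omega_d (D0 : nat -> R -> R) (m : nat) (z : R) : R := 4 * / c0 * 4 ^ m * D0 m (-3 + 4 * z).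

Lemma omega_d0 D0 : D0 O = omega0 -> forall z, omega_d D0 0 z = omega z.
Proof. intros H z. unfold omega_d, omega. rewrite H. simpl. f_equal. ring. f_equal. ring. Qed.

Lemma omega_d_deriv D0 m z : (forall x, is_derive (D0 m) x (D0 (S m) x)) -> is_derive (omega_d D0 m) z (omega_d D0 (S m) z).
Proof.
  intros H. unfold omega_d. apply (D_eq _ _ (4 * / c0 * 4 ^ m * (4 * D0 (S m) (-3 + 4 * z)))).
  simpl; ring. apply D_scal. apply D_affine. apply H.
Qed.

Lemma omega_zero z : z <= 1/2 \/ 1 <= z -> omega z = 0.
Proof.
  intros H. unfold omega. rewrite omega0_zero. ring.
  destruct H. rewrite Rabs_left1; lra. rewrite Rabs_right; lra.
Qed.

Lemma omega_bound z : Rabs (omega z) <= 4 * Rabs (/ c0).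
Proof.
  unfold omega. rewrite !Rabs_mult. rewrite (Rabs_right 4) by lra.
  pose proof (omega0_le1 (4 * z - 3)). pose proof (Rabs_pos (/ c0)). nra.
Qed.

Definition rinv (r : R) (j : nat) : R := / (r * INR (S j)).

Definition hconst (r : R) (M : nat) : R := fsum M (fun j => rinv r j * omega (r * INR (S j))).

(* The [m]-th [y]-derivative of the series [h r y] truncated to [j < M], with [omega (|y| / (r j))]
   written as [omega (y / (r j)) + omega (- y / (r j))], which is smooth in [y]; for [m = 0] the
   terms [omega (r j)] are gathered in [hconst r M]. *)
Definition htrunc (D0 : nat -> R -> R) (r : R) (M : nat) (m : nat) (y : R) : R :=
  (match m with O => hconst r M | _ => 0 end) -
  fsum M (fun j => rinv r j ^ (S m) * (omega_d D0 m (y * rinv r j) + (-1) ^ m * omega_d D0 m (- y * rinv r j))).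

Lemma htrunc_deriv D0 r M m y : (forall x, is_derive (D0 m) x (D0 (S m) x)) ->
  is_derive (htrunc D0 r M m) y (htrunc D0 r M (S m) y).
Proof.
  intros H. unfold htrunc.
  apply (D_eq _ _ (0 - fsum M (fun j => rinv r j ^ S (S m) * (omega_d D0 (S m) (y * rinv r j) + (-1) ^ S m * omega_d D0 (S m) (- y * rinv r j))))).
  ring.
  apply D_minus. destruct m; apply D_const.
  apply (is_derive_fsum M (fun j t => rinv r j ^ S m * (omega_d D0 m (t * rinv r j) + (-1) ^ m * omega_d D0 m (- t * rinv r j)))
     (fun j t => rinv r j ^ S (S m) * (omega_d D0 (S m) (t * rinv r j) + (-1) ^ S m * omega_d D0 (S m) (- t * rinv r j)))).
  intros j.
  apply (D_eq _ _ (rinv r j ^ S m * (rinv r j * omega_d D0 (S m) (y * rinv r j) + (-1) ^ m * (- rinv r j * omega_d D0 (S m) (- y * rinv r j))))).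
  simpl; ring.
  apply D_scal. apply D_plus.
  - apply (D_ext (fun t => omega_d D0 m (0 + rinv r j * t))). intros; f_equal; ring.
    apply D_affine. replace (0 + rinv r j * y) with (y * rinv r j) by ring. apply omega_d_deriv; auto.
  - apply D_scal. apply (D_ext (fun t => omega_d D0 m (0 + - rinv r j * t))). intros; f_equal; ring.
    apply D_affine. replace (0 + - rinv r j * y) with (- y * rinv r j) by ring. apply omega_d_deriv; auto.
Qed.

Lemma pow_le_sqr x k : 0 <= x <= 1 -> (2 <= k)%nat -> x ^ k <= x ^ 2.
Proof.
  intros Hx Hk. induction Hk. lra.
  simpl. simpl in IHHk. assert (0 <= x ^ m) by (apply pow_le; lra). nra.
Qed.

Lemma omega_opp_abs a : omega a + omega (- a) = omega (Rabs a).
Proof.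
  destruct (Rle_lt_dec 0 a).
  - rewrite Rabs_right by lra. rewrite (omega_zero (-a)) by lra. ring.
  - rewrite Rabs_left by lra. rewrite (omega_zero a) by lra. ring.
Qed.

Lemma omega_support z : omega z <> 0 -> 1/2 < z < 1.
Proof.
  intros H. destruct (Rle_lt_dec z (1/2)). exfalso; apply H; apply omega_zero; lra.
  destruct (Rle_lt_dec 1 z). exfalso; apply H; apply omega_zero; lra. lra.
Qed.

Lemma rinv_pos r j : 0 < r -> 0 < rinv r j.
Proof. intros. unfold rinv. apply Rinv_0_lt_compat. apply Rmult_lt_0_compat; auto. apply lt_0_INR; lia. Qed.

Lemma htrunc_bound_deriv D0 r M m Cw y : 0 < r -> (1 <= m)%nat -> (forall z, Rabs (omega_d D0 m z) <= Cw) ->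
  Rabs (htrunc D0 r M m y) <= 4 * Cw * (/ r) ^ (S m).
Proof.
  intros Hr Hm HW. unfold htrunc. destruct m. lia.
  rewrite Rminus_0_l, Rabs_Ropp. eapply Rle_trans. apply fsum_abs.
  assert (HC : 0 <= Cw) by (pose proof (HW 0); pose proof (Rabs_pos (omega_d D0 (S m) 0)); lra).
  eapply Rle_trans. apply (fsum_le M _ (fun j => (2 * Cw * (/ r) ^ (S (S m))) * / (INR (S j) * INR (S j)))).
  { intros j _. rewrite Rabs_mult.
    assert (Hrho : rinv r j = / r * / INR (S j)).
    { unfold rinv. rewrite Rinv_mult. reflexivity. }
    assert (H1 : 0 < / INR (S j)) by (apply Rinv_0_lt_compat; apply lt_0_INR; lia).
    assert (H2 : / INR (S j) <= 1).
    { rewrite <- Rinv_1. apply Rinv_le_contravar. lra. rewrite S_INR. pose proof (pos_INR j). lra. }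
    assert (H3 : Rabs (rinv r j ^ S (S m)) <= (/ r) ^ S (S m) * / (INR (S j) * INR (S j))).
    { rewrite Rabs_right by (left; apply pow_lt; apply rinv_pos; auto).
      rewrite Hrho. rewrite Rpow_mult_distr. apply Rmult_le_compat_l.
      apply pow_le. left; apply Rinv_0_lt_compat; auto.
      eapply Rle_trans. apply pow_le_sqr. lra. lia. rewrite Rinv_mult. simpl. lra. }
    assert (H4 : Rabs (omega_d D0 (S m) (y * rinv r j) + (-1) ^ S m * omega_d D0 (S m) (- y * rinv r j)) <= 2 * Cw).
    { eapply Rle_trans. apply Rabs_triang. rewrite Rabs_mult. rewrite <- RPow_abs.
      replace (Rabs (-1)) with 1 by (rewrite Rabs_left; lra). rewrite pow1. pose proof (HW (y * rinv r j)). pose proof (HW (- y * rinv r j)). lra. }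
    pose proof (Rabs_pos (rinv r j ^ S (S m))).
    pose proof (Rabs_pos (omega_d D0 (S m) (y * rinv r j) + (-1) ^ S m * omega_d D0 (S m) (- y * rinv r j))).
    assert (0 <= (/ r) ^ S (S m) * / (INR (S j) * INR (S j))).
    { apply Rmult_le_pos. apply pow_le. left; apply Rinv_0_lt_compat; auto.
      left; apply Rinv_0_lt_compat. apply Rmult_lt_0_compat; apply lt_0_INR; lia. }
    apply Rle_trans with (((/ r) ^ S (S m) * / (INR (S j) * INR (S j))) * (2 * Cw)).
    apply Rmult_le_compat; auto. apply Req_le. ring. }
  rewrite fsum_scal. pose proof (fsum_invsq M).
  assert (0 <= 2 * Cw * (/ r) ^ S (S m)).
  { apply Rmult_le_pos. lra. apply pow_le. left; apply Rinv_0_lt_compat; auto. }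
  nra.
Qed.

Lemma htrunc0_eq D0 r M y : D0 O = omega0 -> 0 < r ->
  htrunc D0 r M 0 y = hconst r M - fsum M (fun j => rinv r j * omega (Rabs y * rinv r j)).
Proof.
  intros HD Hr. unfold htrunc. f_equal. apply fsum_ext. intros j _.
  rewrite !omega_d0 by auto. simpl. rewrite Rmult_1_r, Rmult_1_l. f_equal.
  replace (- y * rinv r j) with (- (y * rinv r j)) by ring. rewrite omega_opp_abs.
  rewrite Rabs_mult. rewrite (Rabs_right (rinv r j)). reflexivity. left; apply rinv_pos; auto.
Qed.

Lemma hconst_bound r M : 0 < r -> Rabs (hconst r M) <= 2 * (4 * Rabs (/ c0)) * (/ r + 1).
Proof.
  intros Hr. unfold hconst.
  set (Cw0 := 4 * Rabs (/ c0)).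
  assert (HC : 0 <= Cw0) by (unfold Cw0; pose proof (Rabs_pos (/ c0)); lra).
  eapply Rle_trans. apply (fsum_support_bound M _ (2 * Cw0) (/ (2 * r)) (/ r)).
  - lra.
  - apply Rinv_le_contravar; lra.
  - intros j Hj. assert (omega (r * INR (S j)) <> 0) by (intros E; apply Hj; rewrite E; ring).
    apply omega_support in H. assert (HS : 0 < INR (S j)) by (apply lt_0_INR; lia). split.
    + apply Rmult_lt_reg_l with (2 * r). lra. field_simplify; lra.
    + apply Rmult_lt_reg_l with r. lra. field_simplify; lra.
  - intros j. destruct (Req_dec (omega (r * INR (S j))) 0) as [E|E].
    + rewrite E, Rmult_0_r, Rabs_R0. lra.
    + apply omega_support in E. rewrite Rabs_mult. pose proof (omega_bound (r * INR (S j))). fold Cw0 in H.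
      assert (HS : 0 < INR (S j)) by (apply lt_0_INR; lia).
      assert (Rabs (rinv r j) <= 2).
      { unfold rinv. rewrite Rabs_right. rewrite <- (Rinv_inv 2). apply Rinv_le_contravar. lra. lra.
        left; apply Rinv_0_lt_compat; nra. }
      pose proof (Rabs_pos (rinv r j)). pose proof (Rabs_pos (omega (r * INR (S j)))). nra.
  - assert (0 < / (2 * r)) by (apply Rinv_0_lt_compat; lra). nra.
Qed.

Lemma omega_rinv_support r j Y : 0 < r -> omega (Y * rinv r j) <> 0 -> Y < r * INR (S j) < 2 * Y.
Proof.
  intros Hr Hnz. apply omega_support in Hnz. unfold rinv in Hnz.
  assert (HrS : 0 < r * INR (S j)) by (assert (0 < INR (S j)) by (apply lt_0_INR; lia); nra).
  destruct Hnz as [H1 H2].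
  split; apply Rmult_lt_reg_r with (/ (r * INR (S j))); try (apply Rinv_0_lt_compat; lra);
    rewrite ?Rinv_r by lra; lra.
Qed.

(* Only the [j] with [|y| < r j < 2 |y|] contribute, each by at most [4 |1/c0| / max(|y|, r)]. *)
Lemma fsum_omega_rinv_bound r M y : 0 < r ->
  Rabs (fsum M (fun j => rinv r j * omega (Rabs y * rinv r j))) <= 2 * (4 * Rabs (/ c0)) * / r.
Proof.
  intros Hr.
  set (Cw0 := 4 * Rabs (/ c0)).
  assert (HC : 0 <= Cw0) by (unfold Cw0; pose proof (Rabs_pos (/ c0)); lra).
  set (Y := Rabs y). assert (HY : 0 <= Y) by apply Rabs_pos.
  set (Mx := Rmax Y r). assert (HM1 : Y <= Mx) by apply Rmax_l. assert (HM2 : r <= Mx) by apply Rmax_r.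
  eapply Rle_trans. apply (fsum_support_bound M _ (Cw0 / Mx) (Y / r) (2 * Y / r)).
  - apply Rdiv_le_0_compat; lra.
  - unfold Rdiv. assert (0 < / r) by (apply Rinv_0_lt_compat; lra). nra.
  - intros j Hj. assert (omega (Y * rinv r j) <> 0) by (intros E; apply Hj; rewrite E; ring).
    apply omega_rinv_support in H; auto.
    split; apply Rmult_lt_reg_l with r; try lra; field_simplify; lra.
  - intros j. destruct (Req_dec (omega (Y * rinv r j)) 0) as [E|E].
    + rewrite E, Rmult_0_r, Rabs_R0. apply Rdiv_le_0_compat; lra.
    + apply omega_rinv_support in E; auto. unfold rinv.
      assert (HrS : 0 < r * INR (S j)) by lra.
      assert (Mx <= r * INR (S j)).
      { assert (1 <= INR (S j)) by (rewrite S_INR; pose proof (pos_INR j); lra).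
        unfold Mx, Rmax. destruct (Rle_dec Y r); nra. }
      rewrite Rabs_mult. pose proof (omega_bound (Y * / (r * INR (S j)))). fold Cw0 in H0.
      rewrite Rabs_right by (left; apply Rinv_0_lt_compat; lra).
      assert (/ (r * INR (S j)) <= / Mx) by (apply Rinv_le_contravar; lra).
      assert (0 <= / (r * INR (S j))) by (left; apply Rinv_0_lt_compat; lra).
      assert (Rabs (omega (Y * / (r * INR (S j)))) * / (r * INR (S j)) <= Cw0 * / Mx).
      { apply Rmult_le_compat; auto. apply Rabs_pos. }
      unfold Rdiv. lra.
  - assert (HMp : 0 < Mx) by lra.
    replace (Cw0 / Mx * (2 * Y / r + 1 - Y / r)) with (Cw0 * ((Y / r + 1) / Mx)) by (field; lra).
    assert ((Y / r + 1) / Mx <= 2 / r).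
    { apply Rmult_le_reg_r with (Mx * r). nra. field_simplify; try lra; try nra. }
    assert (Cw0 * ((Y / r + 1) / Mx) <= Cw0 * (2 / r)) by (apply Rmult_le_compat_l; auto).
    unfold Rdiv in H0. lra.
Qed.

Lemma htrunc0_bound D0 r M y A' : D0 O = omega0 -> 0 < r -> r <= A' ->
  Rabs (htrunc D0 r M 0 y) <= (4 * Rabs (/ c0)) * (4 + 2 * A') * / r.
Proof.
  intros HD Hr HA. rewrite htrunc0_eq by auto.
  unfold Rminus. eapply Rle_trans. apply Rabs_triang. rewrite Rabs_Ropp.
  pose proof (hconst_bound r M Hr). pose proof (fsum_omega_rinv_bound r M y Hr).
  set (Cw0 := 4 * Rabs (/ c0)) in *.
  assert (HC : 0 <= Cw0) by (unfold Cw0; pose proof (Rabs_pos (/ c0)); lra).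
  assert (1 <= A' * / r).
  { apply Rmult_le_reg_r with r. lra. rewrite Rmult_assoc, Rinv_l by lra. lra. }
  assert (2 * Cw0 * (/ r + 1) <= 2 * Cw0 * (/ r + A' * / r)) by (apply Rmult_le_compat_l; lra).
  nra.
Qed.

Lemma htrunc_dbounded N D0 C0 r M A' :
  D0 O = omega0 -> (forall m x, (m < N)%nat -> is_derive (D0 m) x (D0 (S m) x)) ->
  0 <= C0 -> (forall m x, (m <= N)%nat -> Rabs (D0 m x) <= C0) ->
  0 < r -> r <= A' -> 0 <= A' ->
  dbounded N (/ r) (Rmax (4 * (4 * Rabs (/ c0) * 4 ^ N * C0)) ((4 * Rabs (/ c0)) * (4 + 2 * A')) * / r) (htrunc D0 r M 0).
Proof.
  intros HD0 HDd HC0 HC Hr HA HA0.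
  set (Cw := 4 * Rabs (/ c0) * 4 ^ N * C0).
  set (Ch := Rmax (4 * Cw) ((4 * Rabs (/ c0)) * (4 + 2 * A'))).
  assert (Hir : 0 < / r) by (apply Rinv_0_lt_compat; auto).
  apply (derivs_dbounded N (fun m => htrunc D0 r M m)).
  - intros m x Hm. apply htrunc_deriv. intros; apply HDd; auto.
  - intros m x Hm. destruct m.
    + eapply Rle_trans. apply (htrunc0_bound D0 r M x A'); auto. simpl. rewrite Rmult_1_r.
      apply Rmult_le_compat_r. lra. apply Rmax_r.
    + eapply Rle_trans. apply (htrunc_bound_deriv D0 r M (S m) Cw x); auto. lia.
      { intros z. unfold omega_d. rewrite !Rabs_mult. rewrite (Rabs_right 4) by lra.
        rewrite <- RPow_abs. rewrite (Rabs_right 4) by lra.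
        assert (4 ^ S m <= 4 ^ N) by (apply Rle_pow; lra || lia).
        pose proof (HC (S m) (-3 + 4 * z) Hm). pose proof (Rabs_pos (/ c0)).
        pose proof (Rabs_pos (D0 (S m) (-3 + 4 * z))).
        unfold Cw. assert (0 < 4 ^ S m) by (apply pow_lt; lra).
        apply Rle_trans with (4 * Rabs (/ c0) * 4 ^ S m * C0).
        apply Rmult_le_compat_l. nra. auto.
        apply Rmult_le_compat_r. auto. nra. }
      replace (4 * Cw * (/ r) ^ S (S m)) with (4 * Cw * / r * (/ r) ^ S m) by (simpl; ring).
      apply Rmult_le_compat_r. apply pow_le; lra. apply Rmult_le_compat_r. lra. apply Rmax_l.
Qed.

Lemma h_htrunc D0 r M y A' : D0 O = omega0 -> 0 < r -> 2 <= A' -> A' <= r * INR M -> Rabs y <= A' / 2 ->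
  h r y = htrunc D0 r M 0 y.
Proof.
  intros HD0 Hr HA HM Hy. unfold h. rewrite (Series_fsum _ M).
  - rewrite htrunc0_eq by auto. unfold hconst.
    replace (fsum M (fun j => rinv r j * omega (r * INR (S j))) - fsum M (fun j => rinv r j * omega (Rabs y * rinv r j)))
      with (fsum M (fun j => rinv r j * omega (r * INR (S j))) + -1 * fsum M (fun j => rinv r j * omega (Rabs y * rinv r j))) by ring.
    rewrite <- (fsum_scal M (-1)).
    rewrite <- fsum_plus. apply fsum_ext. intros j _. unfold rinv. simpl.
    unfold Rdiv. ring.
  - intros j Hj. cbv zeta.
    assert (HS : INR M <= INR (S j)) by (apply le_INR; lia).
    assert (Hr2 : A' <= r * INR (S j)) by nra.
    rewrite (omega_zero (r * _)) by lra.
    rewrite (omega_zero (Rabs y / _)). ring.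
    left. apply Rmult_le_reg_r with (r * INR (S j)). lra. unfold Rdiv.
    rewrite Rmult_assoc, Rinv_l by lra. nra.
Qed.

Definition admissibleR (n m : nat) (L : R) (G : (nat -> R) -> R) : Prop :=
  (exists K, forall u v, Rabs (G u - G v) <= K * l1dist n u v) /\
  (exists M, forall u, Rabs (G u) <= M) /\
  (forall u l, (l < m)%nat -> L < Rabs (u l) -> G u = 0).

Definition rmul (G : (nat -> R) -> R) (phi : (nat -> R) -> C) (u : nat -> R) : C :=
  Cmult (RtoC (G u)) (phi u).

Lemma Cmod_RtoC_mult a z : Cmod (Cmult (RtoC a) z) = Rabs a * Cmod z.
Proof. rewrite Cmod_mult, Cmod_R. reflexivity. Qed.

Lemma Ccomb_rmul a b z w : Ccomb 1 (Cmult (RtoC a) z) (-1) (Cmult (RtoC b) w) =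
  Cplus (Cmult (RtoC (a - b)) z) (Cmult (RtoC b) (Ccomb 1 z (-1) w)).
Proof. destruct z, w. unfold Ccomb, Cplus, Cmult, RtoC; simpl. f_equal; ring. Qed.

Lemma admissible_rmul n m L G phi :
  admissibleR n m L G ->
  (exists Kp, forall u v, Cmod (Ccomb 1 (phi u) (-1) (phi v)) <= Kp * l1dist n u v) ->
  (forall u, Cmod (phi u) <= 1) ->
  admissible n m L (rmul G phi).
Proof.
  intros [[K HK] [[M HM] HZ]] [Kp HKp] Hp. split; [|split].
  - exists (K + M * Kp). intros u v. unfold rmul. rewrite Ccomb_rmul.
    eapply Rle_trans. apply Cmod_triangle. rewrite !Cmod_RtoC_mult.
    specialize (HK u v). specialize (HM v). specialize (HKp u v). specialize (Hp u).
    pose proof (l1dist_nonneg n u v). pose proof (Rabs_pos (G u - G v)). pose proof (Rabs_pos (G v)).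
    pose proof (Cmod_ge_0 (phi u)). pose proof (Cmod_ge_0 (Ccomb 1 (phi u) (-1) (phi v))).
    assert (Rabs (G u - G v) * Cmod (phi u) <= K * l1dist n u v) by nra.
    assert (Rabs (G v) * Cmod (Ccomb 1 (phi u) (-1) (phi v)) <= M * (Kp * l1dist n u v)).
    { apply Rmult_le_compat; auto. }
    nra.
  - exists M. intros u. unfold rmul. rewrite Cmod_RtoC_mult. specialize (HM u). specialize (Hp u).
    pose proof (Rabs_pos (G u)). pose proof (Cmod_ge_0 (phi u)). nra.
  - intros u l Hl Hu. unfold rmul. rewrite (HZ u l Hl Hu). destruct (phi u). unfold Cmult, RtoC; simpl.
    f_equal; ring.
Qed.

Fixpoint fdiffv (k : nat) (s : R) (G : (nat -> R) -> R) (j : nat) : (nat -> R) -> R :=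
  match j with
  | O => G
  | S j' => fun u => fdiffv k s G j' (shiftv k s u) - fdiffv k s G j' u
  end.

Lemma fdiffv_setv k s G j : forall u t, fdiffv k s G j (setv u k t) = fdiffN j s (fun t' => G (setv u k t')) t.
Proof.
  induction j; intros u t; simpl. reflexivity.
  rewrite shiftv_setv_same. rewrite !IHj. unfold fdiff. reflexivity.
Qed.

Lemma setv_self u k : setv u k (u k) = u.
Proof. apply functional_extensionality. intros l. unfold setv. destruct (Nat.eqb l k) eqn:E; auto.
  apply Nat.eqb_eq in E. subst. auto. Qed.

Lemma admissibleR_mono n m L L' G : L <= L' -> admissibleR n m L G -> admissibleR n m L' G.
Proof. intros H [A [B Z]]. split; [|split]; auto. intros u l Hl Hu. apply (Z u l); auto; lra. Qed.

Lemma admissibleR_fdiffv n m L k s G : admissibleR n m L G -> forall j, admissibleR n m (L + INR j * Rabs s) (fdiffv k s G j).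
Proof.
  intros HG j. induction j.
  - simpl. replace (L + 0 * Rabs s) with L by ring. auto.
  - destruct IHj as [[K HK] [[M HM] HZ]]. split; [|split].
    + exists (2 * K). intros u v. simpl.
      replace (fdiffv k s G j (shiftv k s u) - fdiffv k s G j u - (fdiffv k s G j (shiftv k s v) - fdiffv k s G j v))
        with ((fdiffv k s G j (shiftv k s u) - fdiffv k s G j (shiftv k s v)) - (fdiffv k s G j u - fdiffv k s G j v)) by ring.
      unfold Rminus at 1. eapply Rle_trans. apply Rabs_triang. rewrite Rabs_Ropp.
      pose proof (HK (shiftv k s u) (shiftv k s v)). rewrite l1dist_shiftv in H. pose proof (HK u v). lra.
    + exists (2 * M). intros u. simpl. unfold Rminus. eapply Rle_trans. apply Rabs_triang.
      rewrite Rabs_Ropp. pose proof (HM (shiftv k s u)). pose proof (HM u). lra.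
    + intros u l Hl Hu. simpl. rewrite S_INR in Hu. rewrite (HZ u l Hl).
      rewrite (HZ (shiftv k s u) l Hl). ring.
      unfold shiftv. destruct (Nat.eqb l k).
      * pose proof (Rabs_triang (u l + s) (-s)). rewrite Rabs_Ropp in H.
        replace (u l + s + - s) with (u l) in H by ring. lra.
      * pose proof (Rabs_pos s). lra.
      * pose proof (Rabs_pos s). lra.
Qed.

Lemma Cmod_Ccomb_opp2 z : Cmod (Ccomb (-1) z (-1) z) = 2 * Cmod z.
Proof.
  replace (Ccomb (-1) z (-1) z) with (Cmult (RtoC (-2)) z).
  rewrite Cmod_RtoC_mult. rewrite Rabs_left by lra. ring.
  destruct z. unfold Ccomb, Cmult, RtoC; simpl. f_equal; ring.
Qed.

Lemma intR_fdiffv_step n k s L G phi j :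
  (k <= n)%nat -> 0 <= L -> admissibleR n (S n) L G ->
  (exists Kp, forall u v, Cmod (Ccomb 1 (phi u) (-1) (phi v)) <= Kp * l1dist n u v) ->
  (forall u, Cmod (phi u) <= 1) ->
  (forall u, phi (shiftv k s u) = (- fst (phi u), - snd (phi u))) ->
  Cmod (intR (S n) (rmul (fdiffv k s G (S j)) phi)) = 2 * Cmod (intR (S n) (rmul (fdiffv k s G j) phi)).
Proof.
  intros Hk HL HG Hp1 Hp2 Hp3.
  set (L' := L + INR (S j) * Rabs s).
  assert (HL' : 0 <= L') by (unfold L'; pose proof (pos_INR (S j)); pose proof (Rabs_pos s); nra).
  assert (G1 : admissible n (S n) L' (rmul (fdiffv k s G j) phi)).
  { apply admissible_rmul; auto. apply admissibleR_mono with (L + INR j * Rabs s).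
    unfold L'. rewrite S_INR. pose proof (Rabs_pos s). lra. apply admissibleR_fdiffv; auto. }
  assert (G2 : admissible n (S n) L' (fun u => rmul (fdiffv k s G j) phi (shiftv k s u))).
  { apply admissible_mono with (L + INR j * Rabs s + Rabs s). unfold L'. rewrite S_INR. lra.
    apply admissible_shiftv. apply admissible_rmul; auto. apply admissibleR_fdiffv; auto. }
  replace (rmul (fdiffv k s G (S j)) phi) with (fun u => Ccomb (-1) (rmul (fdiffv k s G j) phi (shiftv k s u)) (-1) (rmul (fdiffv k s G j) phi u)).
  2: { apply functional_extensionality. intros u. unfold rmul. simpl. rewrite Hp3.
       destruct (phi u). unfold Ccomb, Cmult, RtoC; simpl. f_equal; ring. }
  destruct (intR_bound_linear n (S n) L' (le_n _) HL') as [_ IB].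
  rewrite IB by auto.
  rewrite (intR_shiftv n k s (S n) ltac:(lia) (le_n _) (rmul (fdiffv k s G j) phi) L') by auto.
  apply Cmod_Ccomb_opp2.
Qed.

Lemma intR_fdiffv n k s L G phi N :
  (k <= n)%nat -> 0 <= L -> admissibleR n (S n) L G ->
  (exists Kp, forall u v, Cmod (Ccomb 1 (phi u) (-1) (phi v)) <= Kp * l1dist n u v) ->
  (forall u, Cmod (phi u) <= 1) ->
  (forall u, phi (shiftv k s u) = (- fst (phi u), - snd (phi u))) ->
  Cmod (intR (S n) (rmul (fdiffv k s G N) phi)) = 2 ^ N * Cmod (intR (S n) (rmul G phi)).
Proof.
  intros. induction N. simpl. ring.
  rewrite (intR_fdiffv_step n k s L); auto. rewrite IHN. simpl. ring.
Qed.

Lemma prodR_bound n f B : 0 <= B -> (forall l, (l <= n)%nat -> Rabs (f l) <= B) -> Rabs (prodR n f) <= B ^ S n.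
Proof.
  intros HB. induction n; intros H; simpl.
  - rewrite Rmult_1_r. apply H; lia.
  - rewrite Rabs_mult. assert (Rabs (prodR n f) <= B ^ S n) by (apply IHn; intros; apply H; lia).
    pose proof (H (S n) (le_n _)). simpl in H0.
    pose proof (Rabs_pos (prodR n f)). pose proof (Rabs_pos (f (S n))).
    apply Rle_trans with (B ^ S n * B). apply Rmult_le_compat; auto. simpl. right; ring.
Qed.

Lemma prodR_zero n f l : (l <= n)%nat -> f l = 0 -> prodR n f = 0.
Proof.
  induction n; intros Hl Hf; simpl.
  - assert (l = O) by lia. subst; auto.
  - destruct (Nat.eq_dec l (S n)). subst. rewrite Hf. ring. rewrite IHn. ring. lia. auto.
Qed.

Lemma prodR_ext n f g : (forall l, (l <= n)%nat -> f l = g l) -> prodR n f = prodR n g.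
Proof.
  induction n; simpl; intros H. apply H; lia. rewrite IHn, (H (S n)); auto; intros; apply H; lia.
Qed.

Lemma prodR_factor n k a b : (k <= n)%nat ->
  prodR n (fun l => if Nat.eqb l k then a else b l) = a * prodR n (fun l => if Nat.eqb l k then 1 else b l).
Proof.
  induction n; intros Hk; cbn [prodR].
  - assert (k = O) by lia. subst. simpl. ring.
  - destruct (Nat.eq_dec k (S n)).
    + subst. rewrite Nat.eqb_refl.
      rewrite (prodR_ext n (fun l => if Nat.eqb l (S n) then a else b l) b).
      rewrite (prodR_ext n (fun l => if Nat.eqb l (S n) then 1 else b l) b). ring.
      intros l Hl. destruct (Nat.eqb l (S n)) eqn:E; auto. apply Nat.eqb_eq in E; lia.
      intros l Hl. destruct (Nat.eqb l (S n)) eqn:E; auto. apply Nat.eqb_eq in E; lia.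
    + rewrite IHn by lia. destruct (Nat.eqb (S n) k) eqn:E. apply Nat.eqb_eq in E; lia. ring.
Qed.

Lemma prodR_lip n (g : R -> R) B K : 1 <= B -> (forall t, Rabs (g t) <= B) ->
  (forall a b, Rabs (g a - g b) <= K * Rabs (a - b)) ->
  forall u v, Rabs (prodR n (fun l => g (u l)) - prodR n (fun l => g (v l))) <= INR (S n) * B ^ n * Rabs K * l1dist n u v.
Proof.
  intros HB Hg HK. induction n; intros u v; unfold l1dist; cbn [prodR sumR].
  - simpl. rewrite Rmult_1_r, Rmult_1_l. eapply Rle_trans. apply HK.
    apply Rmult_le_compat_r. apply Rabs_pos. apply Rle_abs.
  - fold (l1dist n u v).
    set (Pu := prodR n (fun l => g (u l))). set (Pv := prodR n (fun l => g (v l))).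
    replace (Pu * g (u (S n)) - Pv * g (v (S n))) with ((Pu - Pv) * g (u (S n)) + Pv * (g (u (S n)) - g (v (S n)))) by ring.
    eapply Rle_trans. apply Rabs_triang. rewrite !Rabs_mult.
    specialize (IHn u v). fold Pu Pv in IHn.
    assert (HPv : Rabs Pv <= B ^ S n) by (apply prodR_bound; auto; lra).
    pose proof (Hg (u (S n))). pose proof (HK (u (S n)) (v (S n))).
    assert (Rabs K * Rabs (u (S n) - v (S n)) >= K * Rabs (u (S n) - v (S n))).
    { pose proof (Rle_abs K). pose proof (Rabs_pos (u (S n) - v (S n))). nra. }
    pose proof (l1dist_nonneg n u v). pose proof (Rabs_pos K).
    pose proof (Rabs_pos (u (S n) - v (S n))). pose proof (Rabs_pos (Pu - Pv)).
    pose proof (Rabs_pos Pv). pose proof (Rabs_pos (g (u (S n)))).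
    assert (HBn : 1 <= B ^ n) by (apply pow_R1_Rle; lra).
    assert (T1 : Rabs (Pu - Pv) * Rabs (g (u (S n))) <= INR (S n) * B ^ n * Rabs K * l1dist n u v * B).
    { apply Rmult_le_compat; auto. }
    assert (T2 : Rabs Pv * Rabs (g (u (S n)) - g (v (S n))) <= B ^ S n * (Rabs K * Rabs (u (S n) - v (S n)))).
    { pose proof (Rabs_pos (g (u (S n)) - g (v (S n)))). apply Rmult_le_compat; auto; lra. }
    assert (HX : 0 <= B * B ^ n * Rabs K) by (apply Rmult_le_pos; [apply Rmult_le_pos; lra|lra]).
    assert (E1 : INR (S n) * B ^ n * Rabs K * l1dist n u v * B = INR (S n) * (B * B ^ n * Rabs K * l1dist n u v)) by ring.
    assert (E2 : B ^ S n * (Rabs K * Rabs (u (S n) - v (S n))) = B * B ^ n * Rabs K * Rabs (u (S n) - v (S n))) by (simpl; ring).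
    rewrite E1 in T1. rewrite E2 in T2.
    assert (HXd : 0 <= B * B ^ n * Rabs K * l1dist n u v) by (apply Rmult_le_pos; auto).
    assert (HXu : 0 <= B * B ^ n * Rabs K * Rabs (u (S n) - v (S n))) by (apply Rmult_le_pos; auto).
    replace (INR (S (S n)) * B ^ S n * Rabs K * (l1dist n u v + Rabs (u (S n) - v (S n))))
      with (INR (S (S n)) * (B * B ^ n * Rabs K * l1dist n u v) + INR (S (S n)) * (B * B ^ n * Rabs K * Rabs (u (S n) - v (S n)))) by (simpl; ring).
    rewrite (S_INR (S n)). pose proof (pos_INR (S n)).
    assert (INR (S n) * (B * B ^ n * Rabs K * Rabs (u (S n) - v (S n))) >= 0) by (apply Rle_ge; apply Rmult_le_pos; auto).
    nra.
Qed.

Definition weight1 (eps P t : R) : R := omega_eps eps (1 - Rabs t) * omega_eps eps (Rabs t - / P).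

Lemma weight1_dbounded NN eps P Aw : 0 < eps -> 0 < P -> dbounded NN (/ eps) Aw (omega_eps eps) ->
  dbounded NN (/ eps) (2 * (2 ^ NN * Aw * Aw)) (weight1 eps P).
Proof.
  intros He HP HQ.
  assert (Hl : 0 <= / eps) by (left; apply Rinv_0_lt_compat; lra).
  set (g := fun t => omega_eps eps (1 + (-1) * t) * omega_eps eps (- / P + 1 * t)).
  assert (Hg : dbounded NN (/ eps) (2 ^ NN * Aw * Aw) g).
  { apply dbounded_mult; auto; apply dbounded_affine; auto; rewrite ?Rabs_Ropp, ?Rabs_R1; try lra.
    rewrite Rabs_left; lra. }
  apply (dbounded_ext NN _ _ (fun t => g t + g (0 + (-1) * t))).
  - intros t. unfold g, weight1.
    assert (Hp : 0 < / P) by (apply Rinv_0_lt_compat; lra).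
    destruct (Rle_lt_dec 0 t).
    + rewrite Rabs_right by lra.
      rewrite (omega_eps_zero eps (- / P + 1 * (0 + -1 * t))) by lra. ring_simplify.
      f_equal; f_equal; ring.
    + rewrite Rabs_left by lra.
      rewrite (omega_eps_zero eps (- / P + 1 * t)) by lra. ring_simplify.
      f_equal; f_equal; ring.
  - replace (2 * (2 ^ NN * Aw * Aw)) with (2 ^ NN * Aw * Aw + 2 ^ NN * Aw * Aw) by ring.
    apply dbounded_plus; auto. apply (dbounded_affine NN _ _ g 0 (-1)); auto. rewrite Rabs_left; lra.
Qed.

Lemma cos_lip a b : Rabs (cos a - cos b) <= Rabs (a - b).
Proof.
  destruct (MVT_abs cos (fun x => - sin x) b a) as [c [Hc _]].
  { intros; apply derivable_pt_lim_cos. }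
  rewrite Hc. rewrite Rabs_Ropp. pose proof (SIN_bound c).
  assert (Rabs (sin c) <= 1) by (apply Rabs_le; lra).
  pose proof (Rabs_pos (a - b)). nra.
Qed.

Lemma sin_lip a b : Rabs (sin a - sin b) <= Rabs (a - b).
Proof.
  destruct (MVT_abs sin cos b a) as [c [Hc _]].
  { intros; apply derivable_pt_lim_sin. }
  rewrite Hc. pose proof (COS_bound c).
  assert (Rabs (cos c) <= 1) by (apply Rabs_le; lra).
  pose proof (Rabs_pos (a - b)). nra.
Qed.

Lemma Cmod_e x : Cmod (e x) = 1.
Proof.
  unfold Cmod, e. cbn [fst snd].
  replace (cos (2 * PI * x) ^ 2 + sin (2 * PI * x) ^ 2) with 1. apply sqrt_1.
  rewrite <- (sin2_cos2 (2 * PI * x)). unfold Rsqr. ring.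
Qed.

Lemma e_lip a b : Cmod (Ccomb 1 (e a) (-1) (e b)) <= 4 * PI * Rabs (a - b).
Proof.
  unfold e, Ccomb; simpl. eapply Rle_trans. apply Cmod_le_abs_sum.
  replace (1 * cos (2 * PI * a) + -1 * cos (2 * PI * b)) with (cos (2 * PI * a) - cos (2 * PI * b)) by ring.
  replace (1 * sin (2 * PI * a) + -1 * sin (2 * PI * b)) with (sin (2 * PI * a) - sin (2 * PI * b)) by ring.
  pose proof (cos_lip (2 * PI * a) (2 * PI * b)). pose proof (sin_lip (2 * PI * a) (2 * PI * b)).
  replace (2 * PI * a - 2 * PI * b) with ((2 * PI) * (a - b)) in * by ring.
  rewrite Rabs_mult in *. rewrite (Rabs_right (2 * PI)) in * by (pose proof PI_RGT_0; lra). lra.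
Qed.

Lemma e_shift x : e (x - 1/2) = (- fst (e x), - snd (e x)).
Proof.
  unfold e; simpl. replace (2 * PI * (x - 1/2)) with (2 * PI * x - PI) by field.
  rewrite cos_minus, sin_minus, cos_PI, sin_PI. f_equal; ring.
Qed.

Lemma sumR_abs n f : Rabs (sumR n f) <= sumR n (fun l => Rabs (f l)).
Proof.
  induction n; simpl. lra. eapply Rle_trans. apply Rabs_triang. lra.
Qed.

Lemma sumR_minus n f g : sumR n f - sumR n g = sumR n (fun l => f l - g l).
Proof. induction n; simpl; try rewrite <- IHn; ring. Qed.

Lemma sumR_lin_lip n (a : nat -> R) A : (forall l, (l <= n)%nat -> Rabs (a l) <= A) ->
  forall u v, Rabs (sumR n (fun l => a l * u l) - sumR n (fun l => a l * v l)) <= A * l1dist n u v.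
Proof.
  intros H u v. rewrite sumR_minus. eapply Rle_trans. apply sumR_abs.
  unfold l1dist. rewrite <- sumR_scal. apply sumR_le. intros l Hl.
  replace (a l * u l - a l * v l) with (a l * (u l - v l)) by ring. rewrite Rabs_mult.
  apply Rmult_le_compat_r. apply Rabs_pos. auto.
Qed.

Lemma sumR_setv n k (a : nat -> R) u t : (k <= n)%nat ->
  sumR n (fun l => a l * setv u k t l) = sumR n (fun l => a l * setv u k 0 l) + a k * t.
Proof.
  intros Hk. rewrite <- (sumR_single n k (a k * t)) by auto. rewrite <- sumR_plus.
  apply sumR_ext. intros l _. unfold setv. destruct (Nat.eqb l k) eqn:E.
  apply Nat.eqb_eq in E; subst; ring. ring.
Qed.

Lemma sumR_shiftv n k s (a : nat -> R) u : (k <= n)%nat ->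
  sumR n (fun l => a l * shiftv k s u l) = sumR n (fun l => a l * u l) + a k * s.
Proof.
  intros Hk. rewrite <- (sumR_single n k (a k * s)) by auto. rewrite <- sumR_plus.
  apply sumR_ext. intros l _. unfold shiftv. destruct (Nat.eqb l k) eqn:E.
  apply Nat.eqb_eq in E; subst; ring. ring.
Qed.

Lemma supnorm_ge n c l : (l <= n)%nat -> IZR (Z.abs (c l)) <= supnorm n c.
Proof.
  induction n; intros Hl; simpl.
  - assert (l = O) by lia. subst. lra.
  - destruct (Nat.eq_dec l (S n)). subst. apply Rmax_r.
    eapply Rle_trans. apply IHn. lia. apply Rmax_l.
Qed.

Lemma supnorm_attained n c : exists k, (k <= n)%nat /\ supnorm n c = IZR (Z.abs (c k)).
Proof.
  induction n; simpl. exists O. split; auto.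
  destruct IHn as [k [Hk E]]. unfold Rmax. destruct (Rle_dec (supnorm n c) (IZR (Z.abs (c (S n))))).
  exists (S n). split; auto. exists k. split; auto.
Qed.

Lemma weight1_bound eps P Aw t : dbounded 0 (/ eps) Aw (omega_eps eps) -> Rabs (weight1 eps P t) <= Aw * Aw.
Proof.
  intros H. unfold weight1. rewrite Rabs_mult. pose proof (H (1 - Rabs t)). pose proof (H (Rabs t - / P)).
  apply Rmult_le_compat; auto; apply Rabs_pos.
Qed.

Lemma weight1_zero eps P t : 0 < eps -> 1 <= Rabs t -> weight1 eps P t = 0.
Proof. intros He Ht. unfold weight1. rewrite omega_eps_zero by (auto; lra). ring. Qed.

Lemma w_eps_prod n eps P u : w_eps n eps P u = prodR n (fun l => weight1 eps P (u l)).
Proof. reflexivity. Qed.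

Lemma w_eps_setv n eps P u k t : (k <= n)%nat ->
  w_eps n eps P (setv u k t) = weight1 eps P t * prodR n (fun l => if Nat.eqb l k then 1 else weight1 eps P (u l)).
Proof.
  intros Hk. rewrite w_eps_prod. rewrite <- prodR_factor by auto.
  apply prodR_ext. intros l _. unfold setv. destruct (Nat.eqb l k); reflexivity.
Qed.

Lemma w_eps_support n eps P u l : 0 < eps -> (l <= n)%nat -> 1 <= Rabs (u l) -> w_eps n eps P u = 0.
Proof. intros He Hl Hu. rewrite w_eps_prod. apply (prodR_zero n _ l Hl). apply weight1_zero; auto. Qed.

Lemma lip_mult_bounded (f g : (nat -> R) -> R) d Kf Kg Bf Bg :
  (forall u v, Rabs (f u - f v) <= Kf * d u v) -> (forall u v, Rabs (g u - g v) <= Kg * d u v) ->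
  (forall u, Rabs (f u) <= Bf) -> (forall u, Rabs (g u) <= Bg) -> (forall u v, 0 <= d u v) ->
  forall u v, Rabs (f u * g u - f v * g v) <= (Rabs Kf * Bg + Bf * Rabs Kg) * d u v.
Proof.
  intros Hf Hg HBf HBg Hd u v.
  replace (f u * g u - f v * g v) with ((f u - f v) * g u + f v * (g u - g v)) by ring.
  eapply Rle_trans. apply Rabs_triang. rewrite !Rabs_mult.
  pose proof (Hf u v). pose proof (Hg u v). pose proof (HBf v). pose proof (HBg u). pose proof (Hd u v).
  assert (Kf * d u v <= Rabs Kf * d u v) by (apply Rmult_le_compat_r; auto; apply Rle_abs).
  assert (Kg * d u v <= Rabs Kg * d u v) by (apply Rmult_le_compat_r; auto; apply Rle_abs).
  pose proof (Rabs_pos (f u - f v)). pose proof (Rabs_pos (g u)). pose proof (Rabs_pos (f v)). pose proof (Rabs_pos (g u - g v)).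
  assert (Rabs (f u - f v) * Rabs (g u) <= (Rabs Kf * d u v) * Bg) by (apply Rmult_le_compat; lra).
  assert (Rabs (f v) * Rabs (g u - g v) <= Bf * (Rabs Kg * d u v)) by (apply Rmult_le_compat; lra).
  lra.
Qed.
Definition hbound (NN : nat) (C0 A : R) : R :=
  Rmax (4 * (4 * Rabs (/ c0) * 4 ^ NN * C0)) ((4 * Rabs (/ c0)) * (4 + 2 * A)).

Lemma sumR_const1 n : sumR n (fun _ => 1) = INR (S n).
Proof. induction n. simpl. ring. cbn [sumR]. rewrite IHn. rewrite (S_INR (S n)). reflexivity. Qed.

Lemma sumR_lin_small n (a : nat -> R) u : (forall l, (l <= n)%nat -> Rabs (a l) <= 1) ->
  (forall l, (l <= n)%nat -> Rabs (u l) < 1) -> Rabs (sumR n (fun l => a l * u l)) <= INR n + 1.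
Proof.
  intros Ha Hu. eapply Rle_trans. apply sumR_abs.
  rewrite <- S_INR. rewrite <- sumR_const1. apply sumR_le. intros l Hl.
  rewrite Rabs_mult. specialize (Ha l Hl). specialize (Hu l Hl).
  pose proof (Rabs_pos (a l)). pose proof (Rabs_pos (u l)). nra.
Qed.

Lemma w_eps_nz_small n eps P u : 0 < eps -> w_eps n eps P u <> 0 -> forall l, (l <= n)%nat -> Rabs (u l) < 1.
Proof.
  intros He H l Hl. destruct (Rlt_le_dec (Rabs (u l)) 1); auto.
  exfalso. apply H. apply (w_eps_support n eps P u l); auto.
Qed.

Lemma up_nat (z : R) : 0 <= z -> z <= INR (Z.to_nat (up z)).
Proof.
  intros Hz. destruct (archimed z) as [H1 _].
  assert (0 <= up z)%Z. { apply le_IZR. lra. }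
  rewrite INR_IZR_INZ. rewrite Z2Nat.id by auto. lra.
Qed.

Lemma intR_zero m F : (forall u, F u = (0,0)) -> intR m F = (0,0).
Proof.
  revert F. induction m; intros F H; simpl. apply H.
  unfold CIntR. rewrite (functional_extensionality (fun t => Re (intR m (fun u => F (setv u m t)))) (fun _ => 0)).
  rewrite (functional_extensionality (fun t => Im (intR m (fun u => F (setv u m t)))) (fun _ => 0)).
  rewrite (RIntR_compact (fun _ => 0) 0). rewrite RInt_const. unfold scal; simpl; unfold mult; simpl.
  f_equal; ring.
  intros; apply continuous_const. intros; reflexivity. lra.
  intros t. rewrite IHm; auto.
  intros t. rewrite IHm; auto.
Qed.

Lemma h_eq0 x y : 2 <= x -> 2 * Rabs y <= x -> h x y = 0.
Proof.
  intros Hx Hy. unfold h. rewrite (Series_fsum _ 0); [reflexivity|]. intros j _. cbv zeta.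
  assert (HS1 : 1 <= INR (S j)) by (rewrite S_INR; pose proof (pos_INR j); lra).
  rewrite (omega_zero (x * _)) by nra.
  rewrite (omega_zero (Rabs _ / _)); [ring|]. left.
  apply Rmult_le_reg_r with (x * INR (S j)); [nra|]. unfold Rdiv.
  rewrite Rmult_assoc, Rinv_l by nra. nra.
Qed.

Definition phase (n : nat) (q P : R) (c : nat -> Z) (u : nat -> R) : C :=
  e_q q (- P * sumR n (fun k => IZR (c k) * u k)).

Lemma Cmod_phase n q P c u : Cmod (phase n q P c u) = 1.
Proof. apply Cmod_e. Qed.

Lemma phase_lipschitz n q P c : 0 < q -> 0 < P -> forall u v,
  Cmod (Ccomb 1 (phase n q P c u) (-1) (phase n q P c v)) <= 4 * PI * (P / q * supnorm n c) * l1dist n u v.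
Proof.
  intros Hq HP u v. unfold phase, e_q.
  eapply Rle_trans. apply e_lip.
  apply Rle_trans with (4 * PI * ((P / q * supnorm n c) * l1dist n u v)); [| right; ring].
  apply Rmult_le_compat_l. pose proof PI_RGT_0; lra.
  replace (- P * sumR n (fun k => IZR (c k) * u k) / q - - P * sumR n (fun k => IZR (c k) * v k) / q)
    with (- (P / q) * (sumR n (fun k => IZR (c k) * u k) - sumR n (fun k => IZR (c k) * v k))) by (field; lra).
  rewrite Rabs_mult, Rabs_Ropp, (Rabs_right (P / q)) by (left; apply Rdiv_lt_0_compat; lra).
  rewrite Rmult_assoc. apply Rmult_le_compat_l. left; apply Rdiv_lt_0_compat; lra.
  apply sumR_lin_lip. intros l Hl. rewrite <- abs_IZR. apply supnorm_ge; auto.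
Qed.

(* Shifting [u_k] by [q / (2 P c_k)] moves the phase by half a period. *)
Lemma phase_shiftv n q P c k u : (k <= n)%nat -> q <> 0 -> P <> 0 -> IZR (c k) <> 0 ->
  phase n q P c (shiftv k (q / (2 * P * IZR (c k))) u) =
  (- fst (phase n q P c u), - snd (phase n q P c u)).
Proof.
  intros Hk Hq HP Hc. unfold phase, e_q. rewrite sumR_shiftv by auto.
  replace (- P * (sumR n (fun l => IZR (c l) * u l) + IZR (c k) * (q / (2 * P * IZR (c k)))) / q)
    with (- P * sumR n (fun l => IZR (c l) * u l) / q - 1/2) by (field; auto).
  apply e_shift.
Qed.

Lemma Ic_rmul n eps B i0 j0 x y q c :
  Ic n eps B i0 j0 x y q c =
  intR (S n) (rmul (fun u => w_eps n eps (B / (IZR (x i0) * IZR (y j0))) u *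
                   h (INR q / sqrt B) (sumR n (fun l => (IZR (x l) * IZR (y l) / (IZR (x i0) * IZR (y j0))) * u l)))
                 (phase n (INR q) (B / (IZR (x i0) * IZR (y j0))) c)).
Proof.
  unfold Ic, rmul, phase. cbv zeta. f_equal. apply functional_extensionality. intros u.
  do 4 f_equal.
  rewrite (sumR_ext n (fun l => (IZR (x l) * IZR (y l) / (IZR (x i0) * IZR (y j0))) * u l)
    (fun l => / (IZR (x i0) * IZR (y j0)) * (IZR (x l) * IZR (y l) * u l))).
  rewrite sumR_scal. unfold Rdiv. ring.
  intros l _. unfold Rdiv. ring.
Qed.

Lemma ratio_abs_le1 (xl yl X Y : Z) : (Z.abs xl <= X)%Z -> (Z.abs yl <= Y)%Z -> (1 <= X)%Z -> (1 <= Y)%Z ->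
  Rabs (IZR xl * IZR yl / (IZR X * IZR Y)) <= 1.
Proof.
  intros Hx Hy HX HY. apply IZR_le in Hx, Hy, HX, HY. rewrite abs_IZR in Hx, Hy.
  unfold Rdiv. rewrite !Rabs_mult, (Rabs_right (/ _)) by (left; apply Rinv_0_lt_compat; nra).
  assert (Rabs (IZR xl) * Rabs (IZR yl) <= IZR X * IZR Y) by (apply Rmult_le_compat; auto; apply Rabs_pos).
  apply Rmult_le_reg_r with (IZR X * IZR Y). nra. rewrite Rmult_assoc, Rinv_l by nra. lra.
Qed.

Section Estimate.
Variables (n N : nat) (eps Aom C0 : R) (D0 : nat -> R -> R).
Hypotheses (He : 0 < eps) (HAom : dbounded (S N) (/ eps) Aom (omega_eps eps))
  (HD00 : D0 O = omega0) (HD0d : forall m x, (m < S N)%nat -> is_derive (D0 m) x (D0 (S m) x))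
  (HC00 : 0 <= C0) (HC0 : forall m x, (m <= S N)%nat -> Rabs (D0 m x) <= C0).

(* [Amax / 2 = n + 1] bounds the argument of [h] on the support of the weight. *)
Let Amax := 2 * (INR n + 1).
Let Ch := hbound (S N) C0 Amax.
Let Bw1 := Rmax 1 (Aom * Aom).
Let Aw := 2 * (2 ^ S N * Aom * Aom).
Let Lam := Rmax (Amax / eps) 1.

Definition Ktrivial : R := 4 ^ S n * (Bw1 ^ S n * Ch).
Definition Kreduced : R :=
  (4 * (1 + INR N * Amax / 2)) ^ S n * (2 ^ S N * (Bw1 ^ S n * Aw) * Ch) * (Lam / 4) ^ N.
Definition Kbound : R := Kreduced + Ktrivial + 1.

Lemma Amax_ge2 : 2 <= Amax.
Proof. unfold Amax. pose proof (pos_INR n). lra. Qed.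

Lemma Ch_nonneg : 0 <= Ch.
Proof.
  unfold Ch, hbound. eapply Rle_trans; [| apply Rmax_r]. pose proof (Rabs_pos (/ c0)). pose proof Amax_ge2.
  apply Rmult_le_pos; lra.
Qed.

Lemma Bw1_ge1 : 1 <= Bw1.
Proof. apply Rmax_l. Qed.

Lemma Lam_ge1 : 1 <= Lam.
Proof. apply Rmax_r. Qed.

Lemma Aw_nonneg : 0 <= Aw.
Proof. unfold Aw. pose proof (dbounded_nonneg _ _ _ _ HAom). assert (0 < 2 ^ S N) by (apply pow_lt; lra). nra. Qed.

Lemma Ktrivial_nonneg : 0 <= Ktrivial.
Proof.
  pose proof Ch_nonneg. pose proof Bw1_ge1.
  unfold Ktrivial. repeat apply Rmult_le_pos; try apply pow_le; lra.
Qed.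

Lemma Kreduced_nonneg : 0 <= Kreduced.
Proof.
  pose proof Ch_nonneg. pose proof Bw1_ge1. pose proof (dbounded_nonneg _ _ _ _ HAom). pose proof Amax_ge2.
  pose proof (pos_INR N). assert (0 <= INR N * Amax) by nra. pose proof Lam_ge1.
  unfold Kreduced. repeat apply Rmult_le_pos; try apply pow_le; lra.
Qed.

Lemma Kbound_pos : 0 < Kbound.
Proof. pose proof Ktrivial_nonneg. pose proof Kreduced_nonneg. unfold Kbound. lra. Qed.

Section Slice.
Variables (P r : R) (M : nat) (a : nat -> R).
Hypotheses (HP : 0 < P) (Hr : 0 < r) (HrA : r <= Amax)
  (Ha : forall l, (l <= n)%nat -> Rabs (a l) <= 1).

Let htr := htrunc D0 r M 0.
Let linform (u : nat -> R) := sumR n (fun l => a l * u l).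
Let amplitude (u : nat -> R) := w_eps n eps P u * htr (linform u).

Lemma htr_dbounded : dbounded (S N) (/ r) (Ch * / r) htr.
Proof. apply htrunc_dbounded; auto. pose proof Amax_ge2; lra. Qed.

Lemma htr_bound y : Rabs (htr y) <= Ch * / r.
Proof. apply (dbounded_bound (S N) (/ r)). apply htr_dbounded. Qed.

Lemma weight1_dbounded_eps : dbounded (S N) (/ eps) Aw (weight1 eps P).
Proof. apply weight1_dbounded; auto. Qed.

Lemma weight1_bound1 t : Rabs (weight1 eps P t) <= Bw1.
Proof.
  eapply Rle_trans. apply (weight1_bound eps P Aom). intros t0. apply (dbounded_bound (S N) (/ eps)). exact HAom.
  apply Rmax_r.
Qed.

Lemma w_eps_bound u : Rabs (w_eps n eps P u) <= Bw1 ^ S n.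
Proof. rewrite w_eps_prod. apply prodR_bound. pose proof Bw1_ge1; lra. intros; apply weight1_bound1. Qed.

Lemma amplitude_bound u : Rabs (amplitude u) <= Bw1 ^ S n * (Ch * / r).
Proof.
  unfold amplitude. rewrite Rabs_mult. apply Rmult_le_compat; try apply Rabs_pos. apply w_eps_bound. apply htr_bound.
Qed.

Lemma amplitude_admissible : admissibleR n (S n) 1 amplitude.
Proof.
  split; [|split].
  - assert (Hwl : forall a0 b0, Rabs (weight1 eps P a0 - weight1 eps P b0) <= (Aw * / eps) * Rabs (a0 - b0)).
    { intros a0 b0. exact (dbounded1_lipschitz _ _ _ (dbounded_1 N _ _ _ weight1_dbounded_eps) b0 a0). }
    assert (Hhl : forall y1 y2, Rabs (htr y1 - htr y2) <= (Ch * / r * / r) * Rabs (y1 - y2)).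
    { intros y1 y2. exact (dbounded1_lipschitz _ _ _ (dbounded_1 N _ _ _ htr_dbounded) y2 y1). }
    eexists. intros u v. unfold amplitude.
    apply (lip_mult_bounded (w_eps n eps P) (fun u => htr (linform u)) (l1dist n)
            (INR (S n) * Bw1 ^ n * Rabs (Aw * / eps)) (Ch * / r * / r) (Bw1 ^ S n) (Ch * / r)).
    + intros u0 v0. rewrite !w_eps_prod. apply prodR_lip. apply Bw1_ge1. apply weight1_bound1. apply Hwl.
    + intros u0 v0. eapply Rle_trans. apply Hhl. pose proof (sumR_lin_lip n a 1 Ha u0 v0).
      assert (0 <= Ch * / r * / r).
      { pose proof Ch_nonneg. assert (0 < / r) by (apply Rinv_0_lt_compat; lra). nra. }
      rewrite Rmult_1_l in H. apply Rmult_le_compat_l; auto.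
    + apply w_eps_bound.
    + intros; apply htr_bound.
    + intros; apply l1dist_nonneg.
  - exists (Bw1 ^ S n * (Ch * / r)). apply amplitude_bound.
  - intros u l Hl Hu. unfold amplitude. rewrite (w_eps_support n eps P u l); auto. ring. lia. lra.
Qed.

Lemma amplitude_setv_dbounded k u : (k <= n)%nat ->
  dbounded (S N) (Lam * / r) (2 ^ S N * (Bw1 ^ S n * Aw) * (Ch * / r)) (fun t => amplitude (setv u k t)).
Proof.
  intros Hk.
  set (cst := prodR n (fun l => if Nat.eqb l k then 1 else weight1 eps P (u l))).
  set (a0 := sumR n (fun l => a l * setv u k 0 l)).
  assert (Hcst : Rabs cst <= Bw1 ^ S n).
  { apply prodR_bound. pose proof Bw1_ge1; lra. intros l _. destruct (Nat.eqb l k).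
    rewrite Rabs_R1. apply Bw1_ge1. apply weight1_bound1. }
  assert (Hir : 0 < / r) by (apply Rinv_0_lt_compat; lra).
  assert (HLr : 0 <= Lam * / r) by (pose proof Lam_ge1; nra).
  apply (dbounded_ext (S N) _ _ (fun t => (cst * weight1 eps P t) * htr (a0 + a k * t))).
  { intros t. unfold amplitude. rewrite w_eps_setv by auto. unfold linform. rewrite sumR_setv by auto. fold cst a0. ring. }
  apply dbounded_mult; auto.
  - apply dbounded_rate_mono with (/ eps). left; apply Rinv_0_lt_compat; lra.
    { assert (H1 : 1 <= Amax * / r) by (apply Rmult_le_reg_r with r; auto; rewrite Rmult_assoc, Rinv_l by lra; lra).
      assert (H2 : / eps <= Amax / eps * / r) by (unfold Rdiv; assert (0 < / eps) by (apply Rinv_0_lt_compat; lra); nra).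
      apply Rle_trans with (Amax / eps * / r); auto.
      apply Rmult_le_compat_r. lra. apply Rmax_l. }
    apply dbounded_mono with (Rabs cst * Aw). left; apply Rinv_0_lt_compat; lra.
    apply Rmult_le_compat_r. apply Aw_nonneg. auto.
    apply dbounded_scal. apply weight1_dbounded_eps.
  - apply dbounded_rate_mono with (/ r). lra.
    { replace (/ r) with (1 * / r) at 1 by ring. apply Rmult_le_compat_r. lra. apply Rmax_r. }
    apply dbounded_affine. lra. apply Ha; auto. apply htr_dbounded.
Qed.

Variable phi : (nat -> R) -> C.
Hypotheses (Hphi_lip : exists Kp, forall u v, Cmod (Ccomb 1 (phi u) (-1) (phi v)) <= Kp * l1dist n u v)
  (Hphi_bound : forall u, Cmod (phi u) <= 1).

Lemma Cmod_rmul_bound F Bd u : (forall u, Rabs (F u) <= Bd) -> Cmod (rmul F phi u) <= Bd.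
Proof.
  intros HF. unfold rmul. rewrite Cmod_RtoC_mult. pose proof (HF u). pose proof (Hphi_bound u).
  pose proof (Rabs_pos (F u)). pose proof (Cmod_ge_0 (phi u)). nra.
Qed.

Lemma intR_amplitude_trivial : Cmod (intR (S n) (rmul amplitude phi)) <= Ktrivial * / r.
Proof.
  destruct (intR_bound_linear n (S n) 1 (le_n _) ltac:(lra)) as [Hbound _].
  eapply Rle_trans. apply (Hbound _ (Bw1 ^ S n * (Ch * / r))).
  - apply admissible_rmul; auto. apply amplitude_admissible.
  - intros u. apply Cmod_rmul_bound. apply amplitude_bound.
  - unfold Ktrivial. rewrite Rmult_1_r. right. ring.
Qed.

(* Taking [N] differences along a half period of the phase multiplies the integral by [(-2)^N],
   while each difference gains a factor [|s| Lam / r] from the derivative bounds. *)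
Lemma intR_amplitude_reduced k s : (k <= n)%nat -> 2 * Rabs s <= r ->
  (forall u, phi (shiftv k s u) = (- fst (phi u), - snd (phi u))) ->
  Cmod (intR (S n) (rmul amplitude phi)) <= Kreduced * / r * (2 * Rabs s / r) ^ N.
Proof.
  intros Hk Hs Hflip.
  set (Afac := 2 ^ S N * (Bw1 ^ S n * Aw) * (Ch * / r)).
  set (lam := Lam * / r).
  assert (Hlam : 0 <= lam) by (unfold lam; pose proof Lam_ge1;
    assert (0 < / r) by (apply Rinv_0_lt_compat; lra); nra).
  assert (HDN : forall u, Rabs (fdiffv k s amplitude N u) <= Rabs s ^ N * Afac * lam ^ N).
  { intros u. rewrite <- (setv_self u k), fdiffv_setv.
    apply fdiffN_bound; auto. apply dbounded_pred, amplitude_setv_dbounded; auto. }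
  set (L := 1 + INR N * Rabs s).
  assert (HL : 0 <= L) by (unfold L; pose proof (pos_INR N); pose proof (Rabs_pos s); nra).
  destruct (intR_bound_linear n (S n) L (le_n _) HL) as [Hbound _].
  assert (HIN : 2 ^ N * Cmod (intR (S n) (rmul amplitude phi)) <= (4 * L) ^ S n * (Rabs s ^ N * Afac * lam ^ N)).
  { rewrite <- (intR_fdiffv n k s 1 amplitude phi N); auto; [|lra|apply amplitude_admissible].
    apply Hbound. apply admissible_rmul; auto. apply admissibleR_fdiffv, amplitude_admissible.
    intros u. apply Cmod_rmul_bound, HDN. }
  assert (HLL : (4 * L) ^ S n <= (4 * (1 + INR N * Amax / 2)) ^ S n).
  { apply pow_incr. unfold L. pose proof (pos_INR N). pose proof (Rabs_pos s). split; [nra|].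
    assert (INR N * Rabs s <= INR N * Amax / 2) by nra. lra. }
  assert (HAfac : 0 <= Afac).
  { unfold Afac. pose proof Ch_nonneg. pose proof Bw1_ge1.
    assert (0 < / r) by (apply Rinv_0_lt_compat; lra).
    apply Rmult_le_pos; [apply Rmult_le_pos|apply Rmult_le_pos]; try apply pow_le; try lra.
    apply Rmult_le_pos; [apply pow_le; lra|apply Aw_nonneg]. }
  assert (H2N : 0 < 2 ^ N) by (apply pow_lt; lra).
  apply Rmult_le_reg_l with (2 ^ N); auto.
  eapply Rle_trans; [apply HIN|].
  replace ((4 * L) ^ S n * (Rabs s ^ N * Afac * lam ^ N)) with ((4 * L) ^ S n * (Afac * (Rabs s * lam) ^ N))
    by (rewrite (Rpow_mult_distr (Rabs s) lam); ring).
  eapply Rle_trans.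
  { apply Rmult_le_compat_r; [|apply HLL]. apply Rmult_le_pos; auto. apply pow_le.
    apply Rmult_le_pos; auto. apply Rabs_pos. }
  right. unfold Kreduced, Afac, lam.
  replace (Rabs s * (Lam * / r)) with (2 * ((Lam / 4) * (2 * Rabs s / r))) by (field; lra).
  rewrite !Rpow_mult_distr. ring.
Qed.

End Slice.

Lemma w_eps_nz_sumR_small P a u : (forall l, (l <= n)%nat -> Rabs (a l) <= 1) ->
  w_eps n eps P u <> 0 -> 2 * Rabs (sumR n (fun l => a l * u l)) <= Amax.
Proof.
  intros Ha Hw. pose proof (sumR_lin_small n a u Ha (w_eps_nz_small n eps P u He Hw)). unfold Amax. lra.
Qed.

Lemma intR_weighted_h_large P r a phi : Amax < r -> (forall l, (l <= n)%nat -> Rabs (a l) <= 1) ->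
  intR (S n) (rmul (fun u => w_eps n eps P u * h r (sumR n (fun l => a l * u l))) phi) = (0, 0).
Proof.
  intros HrA Ha. apply intR_zero. intros u. unfold rmul.
  replace (w_eps n eps P u * h r (sumR n (fun l => a l * u l))) with 0.
  { destruct (phi u). unfold Cmult, RtoC; simpl. f_equal; ring. }
  destruct (Req_dec (w_eps n eps P u) 0) as [E|E]; [rewrite E; ring|].
  rewrite h_eq0; [ring| |]; pose proof Amax_ge2; pose proof (w_eps_nz_sumR_small P a u Ha E); lra.
Qed.

Lemma intR_weighted_h_htrunc P r a phi : 0 < r -> r <= Amax -> (forall l, (l <= n)%nat -> Rabs (a l) <= 1) ->
  let M := Z.to_nat (up (Amax / r)) in
  intR (S n) (rmul (fun u => w_eps n eps P u * h r (sumR n (fun l => a l * u l))) phi) =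
  intR (S n) (rmul (fun u => w_eps n eps P u * htrunc D0 r M 0 (sumR n (fun l => a l * u l))) phi).
Proof.
  intros Hr HrA Ha M. pose proof Amax_ge2.
  assert (HM : Amax <= r * INR M).
  { pose proof (up_nat (Amax / r) ltac:(apply Rdiv_le_0_compat; lra)) as Hup.
    fold M in Hup. apply Rmult_le_compat_l with (r := r) in Hup; [|lra].
    replace (r * (Amax / r)) with Amax in Hup by (field; lra). lra. }
  f_equal. apply functional_extensionality. intros u. unfold rmul. do 2 f_equal.
  destruct (Req_dec (w_eps n eps P u) 0) as [E|E]; [rewrite E; ring|].
  f_equal. apply (h_htrunc D0 r M _ Amax); auto.
  pose proof (w_eps_nz_sumR_small P a u Ha E); lra.
Qed.

Lemma weighted_integral_bound P r a phi k s :
  0 < P -> 0 < r -> (forall l, (l <= n)%nat -> Rabs (a l) <= 1) -> (k <= n)%nat ->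
  (exists Kp, forall u v, Cmod (Ccomb 1 (phi u) (-1) (phi v)) <= Kp * l1dist n u v) ->
  (forall u, Cmod (phi u) <= 1) ->
  (forall u, phi (shiftv k s u) = (- fst (phi u), - snd (phi u))) ->
  Cmod (intR (S n) (rmul (fun u => w_eps n eps P u * h r (sumR n (fun l => a l * u l))) phi))
    <= Kbound * / r * (2 * Rabs s / r) ^ N.
Proof.
  intros HP Hr Ha Hk Hphi_lip Hphi_bound Hflip.
  set (rho := 2 * Rabs s / r).
  assert (Hrho : 0 <= rho) by (unfold rho; apply Rdiv_le_0_compat; [pose proof (Rabs_pos s)|]; lra).
  assert (Hir : 0 < / r) by (apply Rinv_0_lt_compat; lra).
  pose proof Kbound_pos. pose proof Ktrivial_nonneg. pose proof Kreduced_nonneg.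
  destruct (Rle_lt_dec r Amax) as [HrA|HrA].
  2: { rewrite intR_weighted_h_large, Cmod00 by auto. apply Rmult_le_pos; [nra|apply pow_le; auto]. }
  rewrite intR_weighted_h_htrunc by auto.
  destruct (Rle_lt_dec 1 rho) as [Hrho1|Hrho1].
  - eapply Rle_trans. apply (intR_amplitude_trivial P r _ a HP Hr HrA Ha phi Hphi_lip Hphi_bound).
    assert (1 <= rho ^ N) by (apply pow_R1_Rle; lra).
    assert (Ktrivial * / r <= Kbound * / r) by (apply Rmult_le_compat_r; unfold Kbound; lra).
    assert (0 <= Kbound * / r) by nra. nra.
  - eapply Rle_trans. apply (intR_amplitude_reduced P r _ a HP Hr HrA Ha phi Hphi_lip Hphi_bound k s); auto.
    { unfold rho in Hrho1. apply Rmult_le_reg_r with (/ r); [auto|].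
      replace (r * / r) with 1 by (field; lra). unfold Rdiv in Hrho1. lra. }
    apply Rmult_le_compat_r. apply pow_le; auto.
    apply Rmult_le_compat_r; unfold Kbound; lra.
Qed.

End Estimate.

Lemma half_period_ratio (q Q X Y S c : R) : 0 < q -> 0 < Q -> 0 < X * Y -> Rabs c = S -> 0 < S ->
  2 * Rabs (q / (2 * (Q * Q / (X * Y)) * c)) / (q / Q) = X * Y / (Q * S).
Proof.
  intros Hq HQ HXY Hc HS.
  assert (HP : 0 < Q * Q / (X * Y)) by (apply Rdiv_lt_0_compat; nra).
  set (P := Q * Q / (X * Y)) in *.
  assert (Habs : Rabs (q / (2 * P * c)) = q / (2 * P * S)).
  { unfold Rdiv. rewrite Rabs_mult, Rabs_inv, !Rabs_mult, Hc, (Rabs_right q), (Rabs_right 2), (Rabs_right P) by lra.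
    reflexivity. }
  rewrite Habs. unfold P. field. repeat split; nra.
Qed.

Theorem mainTheorem3 :
  forall (n N : nat) (eps : R), (2 <= n)%nat -> 0 < eps < 1 ->
  exists K : R, 0 < K /\
  forall (i0 j0 : nat) (B : R) (x y : nat -> Z) (q : nat) (c : nat -> Z),
    (i0 <= n)%nat -> (j0 <= n)%nat -> 1 <= B ->
    (1 <= x i0)%Z -> (1 <= y j0)%Z ->
    (forall i, (i <= n)%nat -> (Z.abs (x i) <= x i0)%Z) ->
    (forall j, (j <= n)%nat -> (Z.abs (y j) <= y j0)%Z) ->
    (1 <= q)%nat ->
    (exists k, (k <= n)%nat /\ c k <> 0%Z) ->
    Cmod (Ic n eps B i0 j0 x y q c)
      <= K * (sqrt B / INR q)
           * (IZR (x i0) * IZR (y j0) / (sqrt B * supnorm n c)) ^ N.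
Proof.
  intros n N eps _ Heps.
  destruct (omega_eps_dbounded (S N) eps) as [Aom [_ HAom]]; [lra|].
  destruct (omega0_family (S N)) as [D0 [HD00 [HD0d [C0 [HC00 HC0]]]]].
  exists (Kbound n N eps Aom C0). split; [exact (Kbound_pos n N eps Aom C0 HAom)|].
  intros i0 j0 B x y q c _ _ HB Hx Hy Hxb Hyb Hq [k0 [Hk0 Hck0]].
  destruct (supnorm_attained n c) as [k [Hk Hck]].
  assert (HS : 1 <= supnorm n c) by (eapply Rle_trans; [|apply (supnorm_ge n c k0 Hk0)]; apply IZR_le; lia).
  assert (HX : 1 <= IZR (x i0)) by (apply IZR_le; auto).
  assert (HY : 1 <= IZR (y j0)) by (apply IZR_le; auto).
  assert (HQ : 0 < sqrt B) by (apply sqrt_lt_R0; lra).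
  assert (Hqpos : 0 < INR q) by (apply lt_0_INR; lia).
  assert (HP : B / (IZR (x i0) * IZR (y j0)) = sqrt B * sqrt B / (IZR (x i0) * IZR (y j0)))
    by (rewrite sqrt_sqrt; lra).
  assert (Hck' : Rabs (IZR (c k)) = supnorm n c) by (rewrite <- abs_IZR; auto).
  rewrite Ic_rmul, <- (half_period_ratio (INR q) (sqrt B) _ _ _ (IZR (c k))), <- HP by (auto; nra).
  replace (sqrt B / INR q) with (/ (INR q / sqrt B)) by (field; lra).
  apply (weighted_integral_bound n N eps Aom C0 D0) with (k := k); auto; try lra.
  - apply Rdiv_lt_0_compat; nra.
  - apply Rdiv_lt_0_compat; lra.
  - intros l Hl. apply ratio_abs_le1; auto.
  - eexists. apply phase_lipschitz; auto. apply Rdiv_lt_0_compat; nra.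
  - intros u. rewrite Cmod_phase. lra.
  - intros u. apply phase_shiftv; auto; try lra.
    + assert (0 < B / (IZR (x i0) * IZR (y j0))) by (apply Rdiv_lt_0_compat; nra). lra.
    + intros E. rewrite E, Rabs_R0 in Hck'. lra.
Qed.
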